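(* Let $H = C_5 + C_5 + C_5 + C_5 + C_5 + C_5$ be the Zykov sum of six disjoint copies of the $5$-cycle $C_5$. Then $H \to_e (3,3,3)$, i.e. for every coloring of the edges of $H$ in three colors there is a monochromatic triangle.
   Context: All graphs are finite, undirected, without loops or multiple edges. The Zykov sum $G_1+G_2$ of two vertex-disjoint graphs is the graph obtained from $G_1$ and $G_2$ by joining every vertex of $G_1$ to every vertex of $G_2$ (this operation is associative). For positive integers $a_1,\dots,a_r$, $G \to_e (a_1,\dots,a_r)$ means that for every coloring of $E(G)$ in $r$ colors there is some $i\in\{1,\dots,r\}$ and an $a_i$-clique all of whose edges have color $i$. *)

From mathcomp Require Import all_boot.
Set Implicit Arguments. Unset Strict Implicit. Unset Printing Implicit Defensive.

Definition is_clique (T : finType) (e : rel T) (K : {set T}) : Prop :=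
  forall x y, x \in K -> y \in K -> x != y -> e x y.

(* G ->_e (a_0, ..., a_{r-1}): every r-coloring of the edges (edges are
   identified with the 2-sets [set x; y] with e x y; the coloring is given as
   a function on 2-sets, of which only the values on edges matter) has a
   color i and an (a i)-clique all of whose edges have color i. *)
Definition edge_arrows (T : finType) (e : rel T) (r : nat) (a : 'I_r -> nat)
  : Prop :=
  forall c : {set T} -> 'I_r,
    exists i : 'I_r, exists K : {set T},
      [/\ #|K| = a i, is_clique e K &
          forall x y, x \in K -> y \in K -> x != y -> c [set x; y] = i].

Definition zykov_sum (T1 T2 : finType) (e1 : rel T1) (e2 : rel T2)
  : rel (T1 + T2)%type :=
  fun u v => match u, v with
             | inl x, inl y => e1 x y
             | inr x, inr y => e2 x y
             | _, _ => true
             end.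

Definition C5 : rel 'I_5 :=
  fun x y => (y == (x + 1) %% 5 :> nat) || (x == (y + 1) %% 5 :> nat).

(* H = C5 + C5 + C5 + C5 + C5 + C5 (the Zykov sum is associative). *)
Definition H6C5 :=
  zykov_sum C5 (zykov_sum C5 (zykov_sum C5 (zykov_sum C5 (zykov_sum C5 C5)))).

Definition three3 : 'I_3 -> nat := fun _ => 3.

From mathcomp Require Import all_boot.
From mathcomp Require Import zify.
Set Implicit Arguments. Unset Strict Implicit. Unset Printing Implicit Defensive.

(* Number the vertices of H as v = 5 k + p (copy k < 6, position p < 5 on its
   5-cycle) and suppose a 3-colouring of the edges has no monochromatic
   triangle.  For every vertex v and colour i, the i-neighbourhood of v carries
   no edge of colour i, so it is 2-coloured without monochromatic triangle:
   since K_6 and K_3 + C_5 both arrow (3,3), it contains neither.  Measuring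
   each copy's contribution to the clique number of an i-neighbourhood turns
   this into a test of "local feasibility" that only needs partial knowledge of
   the colouring.  Local feasibility alone forces both C_5-edges at each vertex
   to have the same colour, so every copy of C_5 is monochromatic; permuting
   copies and colours leaves seven patterns of copy colours, and for each one a
   certificate of constraint propagation and case splits, checked by
   computation, refutes every colouring. *)

Definition copy_of v := v %/ 5.
Definition pos_of v := v %% 5.
Definition succ5 p := p.+1 %% 5.

Definition adj u v :=
  (u != v) &&
  [|| copy_of u != copy_of v, pos_of v == succ5 (pos_of u) | pos_of u == succ5 (pos_of v)].

Lemma copy_of_vertex k p : p < 5 -> copy_of (5 * k + p) = k.
Proof. by move=> hp; rewrite /copy_of mulnC divnMDl // divn_small // addn0. Qed.

Lemma pos_of_vertex k p : p < 5 -> pos_of (5 * k + p) = p.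
Proof. by move=> hp; rewrite /pos_of mulnC modnMDl modn_small. Qed.

Lemma pos_of_lt v : pos_of v < 5.
Proof. by rewrite /pos_of ltn_mod. Qed.

Lemma succ5_lt p : succ5 p < 5.
Proof. by rewrite /succ5 ltn_mod. Qed.

Lemma vertex_decomp v : v = 5 * copy_of v + pos_of v.
Proof. by rewrite /copy_of /pos_of mulnC -divn_eq. Qed.

Lemma vertex_lt k p : k < 6 -> p < 5 -> 5 * k + p < 30.
Proof. lia. Qed.

Lemma ltn30_copy v : (v < 30) = (copy_of v < 6).
Proof.
apply/idP/idP => [hv | hk]; first by rewrite /copy_of ltn_divLR.
by rewrite [v]vertex_decomp vertex_lt ?pos_of_lt.
Qed.

Lemma adj_sym u v : adj u v = adj v u.
Proof. by rewrite /adj eq_sym (eq_sym (copy_of u)); congr (_ && (_ || _)); exact: orbC. Qed.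

Lemma adj_irr v : adj v v = false.
Proof. by rewrite /adj eqxx. Qed.

Lemma adj_copies u v : copy_of u != copy_of v -> adj u v.
Proof. by move=> h; rewrite /adj h /= andbT; apply: contra_neq h => ->. Qed.

Lemma adj_succ k p : p < 5 -> adj (5 * k + p) (5 * k + succ5 p).
Proof.
move=> hp; rewrite /adj !copy_of_vertex ?succ5_lt // !pos_of_vertex ?succ5_lt // eqxx /=.
by rewrite eqn_add2l /succ5; case: p hp => [|[|[|[|[|]]]]].
Qed.

Lemma adjE u v :
  adj u v = (copy_of u != copy_of v) || (pos_of v == succ5 (pos_of u)) || (pos_of u == succ5 (pos_of v)).
Proof.
rewrite /adj -orbA; case: (copy_of u =P copy_of v) => e /=; last first.
  by rewrite andbT; apply: contra_not_neq e => ->.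
rewrite andb_idl // => hpos; apply: contraTneq hpos => ->; rewrite /succ5.
by have := pos_of_lt v; case: (pos_of v) => [|[|[|[|[|]]]]].
Qed.

Definition mono (T : Type) (t : T -> T -> bool) a b c := (t a b == t b c) && (t a b == t a c).

Definition pairs6 := flatten [seq [seq (a, b) | b <- iota 0 6 & a < b] | a <- iota 0 6].

Definition triples6 : seq (nat * nat * nat) :=
  flatten [seq [seq (ab.1, ab.2, c) | c <- iota 0 6 & ab.2 < c] | ab <- pairs6].

Definition mono_free6 (f : nat -> nat -> bool) :=
  all (fun abc => ~~ mono f abc.1.1 abc.1.2 abc.2) triples6.

Fixpoint bool_words n : seq (seq bool) :=
  if n is n'.+1 then [seq b :: l | l <- bool_words n', b <- [:: true; false]] else [:: [::]].

Definition word_coloring (l : seq bool) (a b : nat) : bool := nth false l (index (a, b) pairs6).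

Lemma mono_free6_words : all (fun l => ~~ mono_free6 (word_coloring l)) (bool_words 15).
Proof. by vm_compute. Qed.

Lemma mem_bool_words n l : size l = n -> l \in bool_words n.
Proof.
elim: n l => [|n IH] [|b l] // [hs]; apply/flatten_mapP; exists l; first exact: IH.
by case: b; rewrite !inE eqxx ?orbT.
Qed.

Lemma triples6_increasing :
  all (fun abc => [&& abc.1.1 < abc.1.2, abc.1.2 < abc.2 & abc.2 < 6]) triples6.
Proof. by []. Qed.

Lemma ramsey33 (f : nat -> nat -> bool) :
  (forall a b c, a < b -> b < c -> c < 6 -> ~~ mono f a b c) -> False.
Proof.
move=> hf; have /negP : ~~ mono_free6 f.
  have /allP /(_ [seq f ab.1 ab.2 | ab <- pairs6]) := mono_free6_words.
  by rewrite mem_bool_words ?size_map //; apply.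
apply; apply/allP => -[[a b] c] /(allP triples6_increasing) /and3P [hab hbc hc].
exact: hf.
Qed.

Lemma C5_equal_succ (g : nat -> bool) : exists2 p, p < 5 & g p = g (succ5 p).
Proof.
case E0: (g 0 == g 1); first by exists 0 => //; apply/eqP.
case E1: (g 1 == g 2); first by exists 1 => //; apply/eqP.
case E2: (g 2 == g 3); first by exists 2 => //; apply/eqP.
case E3: (g 3 == g 4); first by exists 3 => //; apply/eqP.
exists 4 => //; rewrite /succ5 /=.
by move: E0 E1 E2 E3; case: (g 0); case: (g 1); case: (g 2); case: (g 3); case: (g 4).
Qed.

Section K3JoinC5.
Variables (T : Type) (t : T -> T -> bool) (x : nat -> T) (y : nat -> T).
Hypothesis t_sym : forall a b, t a b = t b a.
Hypothesis no_mono_xyy : forall j p, j < 3 -> p < 5 -> ~~ mono t (x j) (y p) (y (succ5 p)).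
Hypothesis no_mono_xxy : forall a b p, a < 3 -> b < 3 -> a != b -> p < 5 -> ~~ mono t (x a) (x b) (y p).
Hypothesis no_mono_xxx : ~~ mono t (x 0) (x 1) (x 2).

(* Some C_5-edge y_p y_(p+1) sees x_a in a single colour; this pins down the
   triangle x_a x_b x_c. *)
Lemma K3_join_C5_colors a b c : a < 3 -> b < 3 -> c < 3 -> a != b -> a != c ->
  ~~ mono t (x a) (x b) (x c) -> t (x a) (x b) = t (x a) (x c) /\ t (x b) (x c) = ~~ t (x a) (x b).
Proof.
move=> ha hb hc hab hac habc.
have [p hp E] := C5_equal_succ (fun p => t (x a) (y p)).
have hq := succ5_lt p.
move: (no_mono_xyy ha hp) (no_mono_xyy hb hp) (no_mono_xyy hc hp).
move: (no_mono_xxy ha hb hab hp) (no_mono_xxy ha hb hab hq).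
move: (no_mono_xxy ha hc hac hp) (no_mono_xxy ha hc hac hq) habc.
rewrite /mono /= -E.
case: (t (x a) (y p)); case: (t (y p) (y (succ5 p))); case: (t (x a) (x b)); case: (t (x a) (x c));
  case: (t (x b) (y p)); case: (t (x b) (y (succ5 p))); case: (t (x c) (y p));
  case: (t (x c) (y (succ5 p))); case: (t (x b) (x c)) => //.
Qed.

Lemma K3_join_C5_mono_triangle : False.
Proof.
have [_ h12] := @K3_join_C5_colors 0 1 2 isT isT isT isT isT no_mono_xxx.
have h102 : ~~ mono t (x 1) (x 0) (x 2).
  by move: no_mono_xxx; rewrite /mono t_sym andbC.
have [h10 _] := @K3_join_C5_colors 1 0 2 isT isT isT isT isT h102.
by move: h10; rewrite t_sym h12; case: (t (x 0) (x 1)).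
Qed.

End K3JoinC5.

Definition colset := (bool * bool * bool)%type.
Definition all_cols : colset := (true, true, true).
Definition has_col (c : nat) (m : colset) : bool :=
  match c with 0 => m.1.1 | 1 => m.1.2 | _ => m.2 end.
Definition only_col (c : nat) : colset := (c == 0, c == 1, c == 2).
Definition drop_col (c : nat) (m : colset) : colset :=
  (m.1.1 && (c != 0), m.1.2 && (c != 1), m.2 && (c != 2)).
Definition no_col (m : colset) : bool := ~~ [|| m.1.1, m.1.2 | m.2].
Definition forces (c : nat) (m : colset) : bool :=
  all (fun c' => has_col c' m ==> (c' == c)) [:: 0; 1; 2].

Lemma has_only_col c c' : c < 3 -> c' < 3 -> has_col c' (only_col c) = (c' == c).
Proof. by case: c => [|[|[|]]] //; case: c' => [|[|[|]]]. Qed.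

Lemma has_drop_col c c' m : c' < 3 -> has_col c' (drop_col c m) = has_col c' m && (c' != c).
Proof. by case: m => [[a b] e]; case: c' => [|[|[|]]] //= _; rewrite ?(eq_sym c). Qed.

Lemma has_no_col c m : no_col m -> has_col c m = false.
Proof. by case: m => [[[] []] []]; case: c => [|[|]]. Qed.

Lemma has_all_cols c : has_col c all_cols.
Proof. by case: c => [|[|]]. Qed.

Lemma forcesP c c' m : forces c m -> has_col c' m -> c' < 3 -> c' = c.
Proof.
move=> /allP h hb hc; apply/eqP; apply: (implyP (h c' _)) => //.
by rewrite !inE; case: c' hb hc => [|[|[|]]].
Qed.

Definition domain := seq (seq colset).
Definition dom_at (d : domain) u v : colset := nth all_cols (nth [::] d u) v.
Definition set_dom1 (d : domain) u v m : domain :=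
  set_nth [::] d u (set_nth all_cols (nth [::] d u) v m).
Definition set_dom (d : domain) u v m : domain := set_dom1 (set_dom1 d u v m) v u m.

Lemma dom_at_set1 d u v m x y :
  dom_at (set_dom1 d u v m) x y = if (x == u) && (y == v) then m else dom_at d x y.
Proof.
rewrite /dom_at /set_dom1 nth_set_nth /=; case: (x =P u) => [->|] //=.
by rewrite nth_set_nth /=; case: (y == v).
Qed.

Lemma dom_at_set d u v m x y :
  dom_at (set_dom d u v m) x y =
  if ((x == u) && (y == v)) || ((x == v) && (y == u)) then m else dom_at d x y.
Proof.
rewrite /set_dom !dom_at_set1.
by case: (x == v); case: (y == u); case: (x == u); case: (y == v).
Qed.

Fixpoint words3 n : seq (seq nat) :=
  if n is n'.+1 then flatten [seq [seq c :: s | s <- words3 n'] | c <- [:: 0; 1; 2]]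
  else [:: [::]].

Lemma mem_words3 n s : size s = n -> all (fun c => c < 3) s -> s \in words3 n.
Proof.
elim: n s => [|n IH] [|c s] // [hs] /andP [hc ha].
have hm c' : c' :: s \in [seq c' :: s0 | s0 <- words3 n] by apply/mapP; exists s; rewrite ?IH.
by rewrite [words3 _]/= !mem_cat; case: c hc => [|[|[|]]] // _; rewrite hm ?orbT.
Qed.

(* With s_p the colour of the edge from v to position p of another copy, the
   colour-i neighbours of v in that copy span a clique of this size. *)
Definition cycle_omega (i : nat) (s : seq nat) : nat :=
  if has (fun x => (x.1 == i) && (x.2 == i)) (zip s (rot 1 s)) then 2
  else if i \in s then 1 else 0.

(* A state records, for each colour i, a lower bound on the clique number of
   the i-neighbourhood of v and whether some copy lies entirely in it. *)
Definition state := seq (nat * bool).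

Definition profile (s : seq nat) : state :=
  [seq (cycle_omega i s, all (eq_op i) s) | i <- [:: 0; 1; 2]].
Definition add_state (st p : state) : state :=
  [seq (x.1.1 + x.2.1, x.1.2 || x.2.2) | x <- zip st p].
(* No K_6, and no K_3 + C_5. *)
Definition ok_state (st : state) : bool :=
  all (fun x => (x.1 <= 5) && (x.2 ==> (x.1 <= 4))) st.
(* The two neighbours of v on its own copy are not adjacent. *)
Definition own_state a b : state :=
  [seq (nat_of_bool ((a == i) || (b == i)), false) | i <- [:: 0; 1; 2]].

Fixpoint le_state (a b : state) : bool :=
  match a, b with
  | [::], [::] => true
  | x :: a', y :: b' => [&& x.1 <= y.1, x.2 ==> y.2 & le_state a' b']
  | _, _ => false
  end.

(* Only le_state-minimal states are kept: ok_state is downward closed. *)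
Fixpoint minimal_states (acc : seq state) (s : seq state) : seq state :=
  if s is x :: s' then
    if has (fun y => le_state y x) acc then minimal_states acc s'
    else minimal_states (x :: filter (fun y => ~~ le_state x y) acc) s'
  else acc.

(* s_p, t_p are the colours of the edges from v to positions p, p + 1 of a copy,
   ms_p is the domain of the first one and es_p that of the copy edge between
   the two positions. *)
Fixpoint compatible (ms es : seq colset) (s t : seq nat) : bool :=
  match ms, es, s, t with
  | m :: ms', e :: es', a :: s', b :: t' =>
      [&& has_col a m, ~~ ((a == b) && forces a e) & compatible ms' es' s' t']
  | _, _, _, _ => true
  end.

Definition copy_profiles (d : domain) v k : seq state :=
  let ms := [seq dom_at d v (5 * k + p) | p <- iota 0 5] in
  let es := [seq dom_at d (5 * k + p) (5 * k + succ5 p) | p <- iota 0 5] in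
  minimal_states [::] [seq profile s | s <- words3 5 & compatible ms es s (rot 1 s)].

Definition extend_states (sts ps : seq state) : seq state :=
  minimal_states [::] (filter ok_state (flatten [seq [seq add_state st p | p <- ps] | st <- sts])).

Definition succ_vertex v := 5 * copy_of v + succ5 (pos_of v).
Definition pred_vertex v := 5 * copy_of v + (pos_of v + 4) %% 5.

Definition locally_feasible (d : domain) v : bool :=
  let own := flatten [seq [seq own_state a b | b <- [:: 0; 1; 2] & has_col b (dom_at d v (pred_vertex v))]
                     | a <- [:: 0; 1; 2] & has_col a (dom_at d v (succ_vertex v))] in
  foldl (fun sts k => extend_states sts (copy_profiles d v k)) (minimal_states [::] own)
    (filter (fun k => k != copy_of v) (iota 0 6)) != [::].

(* Refutation certificates:
   [CT u v w c k]: uw and vw are forced to c, so drop c from uv, continue with k;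
   [CL u v c x k]: giving uv colour c makes x locally infeasible, so drop c;
   [CE u v]: uv has no admissible colour;
   [CX x]: x is locally infeasible;
   [CB u v k0 k1 k2]: split on the colour of uv. *)
Inductive cert :=
 | CT (u v w c : nat) (k : cert)
 | CL (u v c x : nat) (k : cert)
 | CE (u v : nat)
 | CX (x : nat)
 | CB (u v : nat) (k0 k1 k2 : cert).

Fixpoint check_cert (d : domain) (k : cert) : bool :=
  match k with
  | CT u v w c k => [&& u < 30, v < 30, w < 30, adj u v, adj u w, adj v w,
                        forces c (dom_at d u w), forces c (dom_at d v w) &
                        check_cert (set_dom d u v (drop_col c (dom_at d u v))) k]
  | CL u v c x k => [&& u < 30, v < 30, x < 30, adj u v, c < 3,
                        ~~ locally_feasible (set_dom d u v (only_col c)) x &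
                        check_cert (set_dom d u v (drop_col c (dom_at d u v))) k]
  | CE u v => [&& u < 30, v < 30, adj u v & no_col (dom_at d u v)]
  | CX x => (x < 30) && ~~ locally_feasible d x
  | CB u v k0 k1 k2 => [&& u < 30, v < 30, adj u v,
        has_col 0 (dom_at d u v) ==> check_cert (set_dom d u v (only_col 0)) k0,
        has_col 1 (dom_at d u v) ==> check_cert (set_dom d u v (only_col 1)) k1 &
        has_col 2 (dom_at d u v) ==> check_cert (set_dom d u v (only_col 2)) k2]
  end.

Definition copy_edge u v := (copy_of u == copy_of v) && adj u v.

Definition copy_domains (pat : seq nat) : domain :=
  [seq [seq (if copy_edge u v then only_col (nth 0 pat (copy_of u)) else all_cols)
       | v <- iota 0 30] | u <- iota 0 30].

Definition full_domains : domain := [seq [seq all_cols | v <- iota 0 30] | u <- iota 0 30].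

Definition copy_edges_agree :=
  all (fun v => all (fun a => all (fun b => (a == b) ||
      ~~ locally_feasible (set_dom (set_dom full_domains v (succ_vertex v) (only_col a))
                                   v (pred_vertex v) (only_col b)) v)
    (iota 0 3)) (iota 0 3)) (iota 0 30).

Lemma copy_edges_agreeP : copy_edges_agree.
Proof. by vm_compute. Qed.

Lemma le_state_refl a : le_state a a.
Proof. by elim: a => //= x a ->; rewrite leqnn implybb. Qed.

Lemma le_state_trans a b c : le_state a b -> le_state b c -> le_state a c.
Proof.
elim: a b c => [|x a IH] [|y b] [|z c] //= /and3P [h1 h2 h3] /and3P [h4 h5 h6].
rewrite (leq_trans h1 h4) (IH _ _ h3 h6) andbT /=.
by move: h2 h5; case: (x.2); case: (y.2).
Qed.

Lemma le_state_add a a' b b' :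
  le_state a a' -> le_state b b' -> le_state (add_state a b) (add_state a' b').
Proof.
elim: a a' b b' => [|x a IH] [|x' a'] [|y b] [|y' b'] //= /and3P [h1 h2 h3] /and3P [h4 h5 h6].
rewrite /add_state /= in IH *; rewrite leq_add //= (IH _ _ _ h3 h6) andbT.
by move: h2 h5; case: (x.2); case: (x'.2); case: (y.2); case: (y'.2).
Qed.

Lemma ok_state_le a b : le_state a b -> ok_state b -> ok_state a.
Proof.
elim: a b => [|x a IH] [|y b] //= /and3P [h1 h2 h3] /andP [/andP [h4 h5] h6].
rewrite (IH _ h3 h6) andbT (leq_trans h1 h4) /=.
by apply/implyP => hx; apply: leq_trans h1 (implyP h5 (implyP h2 hx)).
Qed.

Lemma le_state_addr a q : size q = size a -> le_state a (add_state a q).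
Proof.
elim: a q => [|x a IH] [|y q] //= [hs].
by rewrite /add_state /= in IH *; rewrite leq_addr (IH _ hs) andbT; case: (x.2).
Qed.

Lemma size_add_state a b : size (add_state a b) = minn (size a) (size b).
Proof. by rewrite /add_state size_map size_zip. Qed.

Lemma nth_add_state a b i : i < size a -> size b = size a ->
  nth (0, false) (add_state a b) i =
  ((nth (0, false) a i).1 + (nth (0, false) b i).1, (nth (0, false) a i).2 || (nth (0, false) b i).2).
Proof.
move=> hi hs; rewrite /add_state (nth_map ((0, false), (0, false))) ?nth_zip //.
by rewrite size_zip hs minnn.
Qed.

Lemma minimal_states_below acc s :
  (forall x, x \in acc -> exists2 y, y \in minimal_states acc s & le_state y x) /\
  (forall x, x \in s -> exists2 y, y \in minimal_states acc s & le_state y x).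
Proof.
elim: s acc => [|z s IH] acc /=.
  by split => // x hx; exists x => //; apply: le_state_refl.
case: ifP => hz.
- have [IH1 IH2] := IH acc; split => // x; rewrite inE => /orP [/eqP ->|hx]; last exact: IH2.
  case/hasP: hz => y0 /IH1 [y hy hyy0] hy0z.
  by exists y => //; apply: le_state_trans hyy0 hy0z.
- have [IH1 IH2] := IH (z :: filter (fun y => ~~ le_state z y) acc); split => x.
  + move=> hx; case hzx: (le_state z x).
    * have [y hy hyz] := IH1 z (mem_head _ _); exists y => //; exact: le_state_trans hyz hzx.
    * by apply: IH1; rewrite inE mem_filter hzx hx orbT.
  + rewrite inE => /orP [/eqP ->|hx]; last exact: IH2.
    exact: IH1 (mem_head _ _).
Qed.

Lemma mem_minimal_states_below s x :
  x \in s -> exists2 y, y \in minimal_states [::] s & le_state y x.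
Proof. by have [_] := minimal_states_below [::] s; apply. Qed.

Lemma nth_profile s i : i < 3 -> nth (0, false) (profile s) i = (cycle_omega i s, all (eq_op i) s).
Proof. by case: i => [|[|[|]]]. Qed.

Lemma nth_own_state a b i : i < 3 ->
  nth (0, false) (own_state a b) i = (nat_of_bool ((a == i) || (b == i)), false).
Proof. by case: i => [|[|[|]]]. Qed.

Definition no_mono_triangle (col : nat -> nat -> nat) :=
  forall x y z, x < 30 -> y < 30 -> z < 30 -> adj x y -> adj y z -> adj x z ->
  col x y = col y z -> col x y = col x z -> False.

Section Soundness.
Variable col : nat -> nat -> nat.
Hypothesis col_sym : forall x y, col x y = col y x.
Hypothesis col_lt : forall x y, col x y < 3.
Hypothesis col_no_mono : no_mono_triangle col.

Definition sound (d : domain) :=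
  forall u v, u < 30 -> v < 30 -> adj u v -> has_col (col u v) (dom_at d u v).

Lemma sound_set d u v m : sound d -> adj u v -> has_col (col u v) m -> sound (set_dom d u v m).
Proof.
move=> hd huv hm x y hx hy hxy; rewrite dom_at_set.
case: ifP => [/orP [] /andP [/eqP -> /eqP ->] | _]; [done | by rewrite col_sym | exact: hd].
Qed.

Section Neighbourhood.
Variable v : nat.
Hypothesis v_lt : v < 30.

Definition nbr i x := [/\ x < 30, adj v x & col v x = i].

Lemma nbr_adj_col i x y : nbr i x -> nbr i y -> adj x y -> col x y != i.
Proof.
case=> hx hvx cx [hy hvy cy] hxy; apply/eqP => e.
by apply: (col_no_mono v_lt hx hy hvx hxy hvy); rewrite ?cx ?cy ?e.
Qed.

(* The colour-i neighbours of v are joined only in the two other colours. *)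
Definition bicol i x y := col x y == i.+1 %% 3.

Lemma bicol_sym i x y : bicol i x y = bicol i y x.
Proof. by rewrite /bicol col_sym. Qed.

Lemma other_color_inj p q i : p < 3 -> q < 3 -> i < 3 -> p != i -> q != i ->
  (p == i.+1 %% 3) = (q == i.+1 %% 3) -> p = q.
Proof. by case: i => [|[|[|]]] //; case: p => [|[|[|]]] //; case: q => [|[|[|]]]. Qed.

Lemma bicol_no_mono i x y z : i < 3 -> nbr i x -> nbr i y -> nbr i z ->
  adj x y -> adj y z -> adj x z -> ~~ mono (bicol i) x y z.
Proof.
move=> hi nx ny nz hxy hyz hxz; apply/negP => /andP [/eqP e1 /eqP e2].
have [hx _ _] := nx; have [hy _ _] := ny; have [hz _ _] := nz.
apply: (col_no_mono hx hy hz hxy hyz hxz).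
- exact: other_color_inj (col_lt _ _) (col_lt _ _) hi (nbr_adj_col nx ny hxy) (nbr_adj_col ny nz hyz) e1.
- exact: other_color_inj (col_lt _ _) (col_lt _ _) hi (nbr_adj_col nx ny hxy) (nbr_adj_col nx nz hxz) e2.
Qed.

Definition nbr_clique i Q :=
  [/\ uniq Q, (forall x, x \in Q -> nbr i x) &
      (forall x y, x \in Q -> y \in Q -> x != y -> adj x y)].

Lemma nbr_clique_nth i Q a b : nbr_clique i Q -> a < size Q -> b < size Q -> a != b ->
  nbr i (nth 0 Q a) /\ adj (nth 0 Q a) (nth 0 Q b).
Proof.
case=> hu hin hadj ha hb hab; split; first by apply/hin/mem_nth.
by apply: hadj; rewrite ?mem_nth ?nth_uniq.
Qed.

Lemma nbr_clique_lt6 i Q : i < 3 -> nbr_clique i Q -> size Q < 6.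
Proof.
move=> hi hQ; rewrite ltnNge; apply/negP => hs.
apply: (ramsey33 (f := fun a b => bicol i (nth 0 Q a) (nth 0 Q b))) => a b c hab hbc hc.
have hQ' j j' : j < 6 -> j' < 6 -> j != j' -> nbr i (nth 0 Q j) /\ adj (nth 0 Q j) (nth 0 Q j').
  by move=> hj hj' hjj'; apply: nbr_clique_nth; rewrite ?(leq_trans _ hs).
have [ha hb] : a < 6 /\ b < 6 by lia.
have [nab nbc nac nca] : [/\ a != b, b != c, a != c & c != a] by split; lia.
have [na hab'] := hQ' a b ha hb nab; have [nb hbc'] := hQ' b c hb hc nbc.
have [nc _] := hQ' c a hc ha nca.
have [_ hac'] := hQ' a c ha hc nac.
exact: bicol_no_mono.
Qed.

Lemma nbr_clique_lt3_full_copy i k Q : i < 3 -> k < 6 -> k != copy_of v ->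
  (forall p, p < 5 -> col v (5 * k + p) = i) ->
  nbr_clique i Q -> (forall x, x \in Q -> copy_of x != k) -> size Q < 3.
Proof.
move=> hi hk hkv hcol hQ hcp; rewrite ltnNge; apply/negP => hs.
pose x j := nth 0 Q j; pose y p := 5 * k + p.
have hx j j' : j < 3 -> j' < 3 -> j != j' -> nbr i (x j) /\ adj (x j) (x j').
  by move=> hj hj' hjj'; apply: nbr_clique_nth; rewrite ?(leq_trans _ hs).
have hy p : p < 5 -> nbr i (y p).
  move=> hp; split; [exact: vertex_lt | | exact: hcol].
  by apply: adj_copies; rewrite /y copy_of_vertex // eq_sym.
have hxy j p : j < 3 -> p < 5 -> adj (x j) (y p).
  move=> hj hp; apply: adj_copies; rewrite /y copy_of_vertex //.
  by apply/hcp/mem_nth; apply: leq_trans hs.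
have hx0 j : j < 3 -> nbr i (x j).
  move=> hj; have hj' : j != j.+1 %% 3 by case: j hj => [|[|[|]]].
  by have [] := hx j _ hj (ltn_pmod j.+1 (isT : 0 < 3)) hj'.
apply: (@K3_join_C5_mono_triangle _ (bicol i) x y (bicol_sym i)).
- move=> j p hj hp; have hq := succ5_lt p.
  exact: bicol_no_mono hi (hx0 _ hj) (hy _ hp) (hy _ hq) (hxy _ _ hj hp) (adj_succ k hp) (hxy _ _ hj hq).
- move=> a b p ha hb hab hp; have [na hab'] := hx a b ha hb hab.
  exact: bicol_no_mono hi na (hx0 _ hb) (hy _ hp) hab' (hxy _ _ hb hp) (hxy _ _ ha hp).
- have [n0 h01] := hx 0 1 isT isT isT; have [n1 h12] := hx 1 2 isT isT isT.
  have [n2 _] := hx 2 0 isT isT isT; have [_ h02] := hx 0 2 isT isT isT.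
  exact: bicol_no_mono.
Qed.

Definition copy_colors k := [seq col v (5 * k + p) | p <- iota 0 5].
Definition other_copies := filter (fun k => k != copy_of v) (iota 0 6).

Lemma other_copies_uniq : uniq other_copies.
Proof. by rewrite filter_uniq // iota_uniq. Qed.

Lemma mem_other_copies k : (k \in other_copies) = (k < 6) && (k != copy_of v).
Proof. by rewrite mem_filter mem_iota add0n andbC. Qed.

Lemma nbr_clique_cat i Q1 Q2 : nbr_clique i Q1 -> nbr_clique i Q2 ->
  (forall x y, x \in Q1 -> y \in Q2 -> copy_of x != copy_of y) -> nbr_clique i (Q1 ++ Q2).
Proof.
move=> [u1 n1 a1] [u2 n2 a2] hd; split.
- rewrite cat_uniq u1 u2 andbT /=; apply/hasP => -[y hy2 hy1].
  by have := hd _ _ hy1 hy2; rewrite eqxx.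
- by move=> x; rewrite mem_cat => /orP [] ?; [apply: n1 | apply: n2].
- move=> x y; rewrite !mem_cat => /orP [] hx /orP [] hy hxy.
  + exact: a1.
  + exact: adj_copies (hd _ _ hx hy).
  + by rewrite adj_sym; apply: adj_copies (hd _ _ hy hx).
  + exact: a2.
Qed.

Lemma nbr_clique1 i x : nbr i x -> nbr_clique i [:: x].
Proof.
move=> hx; split => // [y | y z]; first by rewrite inE => /eqP ->.
by rewrite !inE => /eqP -> /eqP ->; rewrite eqxx.
Qed.

Lemma nbr_clique_in_copy i k : k < 6 -> k != copy_of v ->
  exists Q, [/\ size Q = cycle_omega i (copy_colors k), nbr_clique i Q &
                forall x, x \in Q -> copy_of x = k].
Proof.
move=> hk hkv.
have hN p : p < 5 -> col v (5 * k + p) = i -> nbr i (5 * k + p).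
  move=> hp hc; split => //; first exact: vertex_lt.
  by apply: adj_copies; rewrite copy_of_vertex // eq_sym.
rewrite /cycle_omega; have -> : zip (copy_colors k) (rot 1 (copy_colors k)) =
          [seq (col v (5 * k + p), col v (5 * k + succ5 p)) | p <- iota 0 5] by [].
case: ifP => [/hasP [_ /mapP [p hp ->] /andP [/eqP e1 /eqP e2]] | _].
  have hp5 : p < 5 by move: hp; rewrite mem_iota.
  have hne : 5 * k + p != 5 * k + succ5 p.
    by rewrite eqn_add2l /succ5; case: p {hp e1 e2} hp5 => [|[|[|[|[|]]]]].
  exists [:: 5 * k + p; 5 * k + succ5 p]; split => //.
  - split; first by rewrite /= inE andbT.
    + by move=> x; rewrite !inE => /orP [] /eqP ->; apply: hN; rewrite ?succ5_lt.
    + move=> x y; rewrite !inE => /orP [] /eqP -> /orP [] /eqP -> //; rewrite ?eqxx // => _.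
      * exact: adj_succ.
      * by rewrite adj_sym; apply: adj_succ.
  - by move=> x; rewrite !inE => /orP [] /eqP ->; rewrite copy_of_vertex ?succ5_lt.
case: ifP => [/mapP [p hp e] | _]; last by exists [::].
have hp5 : p < 5 by move: hp; rewrite mem_iota.
exists [:: 5 * k + p]; split => //; first exact/nbr_clique1/hN.
by move=> x; rewrite inE => /eqP ->; rewrite copy_of_vertex.
Qed.

Lemma nbr_clique_in_copies i ks : uniq ks -> {subset ks <= other_copies} ->
  exists Q, [/\ size Q = \sum_(k <- ks) cycle_omega i (copy_colors k), nbr_clique i Q &
                forall x, x \in Q -> copy_of x \in ks].
Proof.
elim: ks => [|k ks IH] /=; first by move=> _ _; exists [::]; rewrite big_nil.
move=> /andP [hk hu] hks.
have /andP [hk6 hkv] : (k < 6) && (k != copy_of v) by rewrite -mem_other_copies hks ?mem_head.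
have [Q1 [s1 g1 c1]] := nbr_clique_in_copy i hk6 hkv.
have [Q2 [s2 g2 c2]] : exists Q, [/\ size Q = \sum_(k <- ks) cycle_omega i (copy_colors k),
                                     nbr_clique i Q & forall x, x \in Q -> copy_of x \in ks].
  by apply: IH => // k' hk'; apply: hks; rewrite inE hk' orbT.
exists (Q1 ++ Q2); split.
- by rewrite size_cat big_cons s1 s2.
- apply: nbr_clique_cat => // x y hx hy; rewrite (c1 _ hx).
  by apply: contraNneq hk => ->; apply: c2.
- by move=> x; rewrite mem_cat inE => /orP [hx|hx]; rewrite ?(c1 _ hx) ?eqxx // c2 ?orbT.
Qed.

Lemma succ_pred_vertex :
  [/\ succ_vertex v < 30, adj v (succ_vertex v), copy_of (succ_vertex v) = copy_of v,
      pred_vertex v < 30 & adj v (pred_vertex v) /\ copy_of (pred_vertex v) = copy_of v].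
Proof.
have hc : copy_of v < 6 by rewrite -ltn30_copy.
have hp := pos_of_lt v.
have hp' : (pos_of v + 4) %% 5 < 5 by rewrite ltn_mod.
have hsp : succ5 ((pos_of v + 4) %% 5) = pos_of v by case: (pos_of v) hp => [|[|[|[|[|]]]]].
rewrite /succ_vertex /pred_vertex !copy_of_vertex ?succ5_lt // !vertex_lt ?succ5_lt //.
split => //; first by rewrite {1}[v]vertex_decomp adj_succ.
have ev : v = 5 * copy_of v + succ5 ((pos_of v + 4) %% 5) by rewrite hsp -vertex_decomp.
by split => //; rewrite adj_sym [X in adj _ X]ev adj_succ.
Qed.

Lemma nbr_clique_own i :
  exists Q, [/\ size Q = nat_of_bool ((col v (succ_vertex v) == i) || (col v (pred_vertex v) == i)),
                nbr_clique i Q & forall x, x \in Q -> copy_of x = copy_of v].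
Proof.
have [h1 h2 h3 h4 [h5 h6]] := succ_pred_vertex.
case: (col v (succ_vertex v) =P i) => [e|_] /=.
  exists [:: succ_vertex v]; split => //; first exact: nbr_clique1.
  by move=> x; rewrite inE => /eqP ->.
case: (col v (pred_vertex v) =P i) => [e|_] /=; last by exists [::].
exists [:: pred_vertex v]; split => //; first exact: nbr_clique1.
by move=> x; rewrite inE => /eqP ->.
Qed.

Definition actual_state ks (st0 : state) :=
  foldl (fun st k => add_state st (profile (copy_colors k))) st0 ks.

Lemma size_actual_state ks st0 : size st0 = 3 -> size (actual_state ks st0) = 3.
Proof.
by elim: ks st0 => [|k ks IH] st0 //= hs; apply: IH; rewrite size_add_state hs.
Qed.

Lemma nth_actual_state ks st0 i : size st0 = 3 -> i < 3 ->
  nth (0, false) (actual_state ks st0) i =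
  ((nth (0, false) st0 i).1 + \sum_(k <- ks) cycle_omega i (copy_colors k),
   (nth (0, false) st0 i).2 || has (fun k => all (eq_op i) (copy_colors k)) ks).
Proof.
elim: ks st0 => [|k ks IH] st0 hs hi /=; first by rewrite big_nil addn0 orbF; case: nth.
rewrite IH ?size_add_state ?hs // nth_add_state ?hs // nth_profile //= big_cons.
by rewrite addnA orbA.
Qed.

Lemma le_actual_state ks st0 : size st0 = 3 -> le_state st0 (actual_state ks st0).
Proof.
elim: ks st0 => [|k ks IH] st0 hs /=; first exact: le_state_refl.
apply: le_state_trans (IH _ _); first by apply: le_state_addr; rewrite hs.
by rewrite size_add_state hs.
Qed.

Definition own_count i := nat_of_bool ((col v (succ_vertex v) == i) || (col v (pred_vertex v) == i)).

Lemma color_class_bound i : i < 3 ->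
  own_count i + \sum_(k <- other_copies) cycle_omega i (copy_colors k) <= 5.
Proof.
move=> hi; have [Q1 [s1 g1 c1]] := nbr_clique_own i.
have [Q2 [s2 g2 c2]] := nbr_clique_in_copies i other_copies_uniq (fun _ => id).
rewrite /own_count -s1 -s2 -size_cat -ltnS; apply: nbr_clique_lt6 hi _.
apply: nbr_clique_cat => // x y hx hy; rewrite c1 //.
by have := c2 _ hy; rewrite mem_other_copies eq_sym => /andP [].
Qed.

Lemma full_copy_bound i k0 : i < 3 -> k0 \in other_copies -> all (eq_op i) (copy_colors k0) ->
  own_count i + \sum_(k <- other_copies) cycle_omega i (copy_colors k) <= 4.
Proof.
move=> hi hk0 hall.
have /andP [hk hkv] : (k0 < 6) && (k0 != copy_of v) by rewrite -mem_other_copies.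
have hcol p : p < 5 -> col v (5 * k0 + p) = i.
  by move=> hp; apply/esym/eqP/(allP hall); apply/mapP; exists p; rewrite ?mem_iota.
have hom : cycle_omega i (copy_colors k0) = 2.
  by rewrite /cycle_omega /copy_colors /= (hcol 0) // (hcol 1) // eqxx.
have [Q1 [s1 g1 c1]] := nbr_clique_own i.
have [Q3 [s3 g3 c3]] := nbr_clique_in_copies i (filter_uniq _ other_copies_uniq)
                          (mem_subseq (filter_subseq (fun k => k != k0) other_copies)).
rewrite (bigD1_seq k0) ?other_copies_uniq //= -big_filter hom addnCA -[4]/(2 + 2) leq_add2l.
rewrite /own_count -s1 -s3 -size_cat -ltnS.
apply: (nbr_clique_lt3_full_copy hi hk hkv hcol).
- apply: nbr_clique_cat => // x y hx hy; rewrite c1 //.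
  by have := c3 _ hy; rewrite mem_filter mem_other_copies => /and3P [_ _]; rewrite eq_sym.
- move=> x; rewrite mem_cat => /orP [hx | hx]; first by rewrite c1 // eq_sym.
  by have := c3 _ hx; rewrite mem_filter => /andP [].
Qed.

Lemma ok_actual_state :
  ok_state (actual_state other_copies (own_state (col v (succ_vertex v)) (col v (pred_vertex v)))).
Proof.
apply/(all_nthP (0, false)) => i; rewrite size_actual_state // => hi.
rewrite nth_actual_state // nth_own_state //= color_class_bound //=.
by apply/implyP => /hasP [k0 hk0 hall]; apply: full_copy_bound hall.
Qed.

Lemma extend_states_complete d ks sts st0 :
  (forall k, k \in ks -> exists2 q, q \in copy_profiles d v k & le_state q (profile (copy_colors k))) ->
  size st0 = 3 -> (exists2 s, s \in sts & le_state s st0) -> ok_state (actual_state ks st0) ->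
  exists2 s, s \in foldl (fun sts k => extend_states sts (copy_profiles d v k)) sts ks &
                   le_state s (actual_state ks st0).
Proof.
elim: ks sts st0 => [|k ks IH] sts st0 hq hs [s hs0 hl] hok //=; first by exists s.
have [q hq1 hq2] := hq k (mem_head _ _).
have hs' : size (add_state st0 (profile (copy_colors k))) = 3 by rewrite size_add_state hs.
apply: IH => //; first by move=> k' hk'; apply: hq; rewrite inE hk' orbT.
have hl' : le_state (add_state s q) (add_state st0 (profile (copy_colors k))) by apply: le_state_add.
have hin : add_state s q \in filter ok_state (flatten [seq [seq add_state st p | p <- copy_profiles d v k] | st <- sts]).
  rewrite mem_filter; apply/andP; split.
  - exact: ok_state_le hl' (ok_state_le (le_actual_state ks hs') hok).
  - by apply/flatten_mapP; exists s => //; apply: map_f.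
have [y hy hly] := mem_minimal_states_below hin.
by exists y => //; apply: le_state_trans hly hl'.
Qed.

Lemma compatible_copy_colors d k : sound d -> k < 6 -> k != copy_of v ->
  compatible [seq dom_at d v (5 * k + p) | p <- iota 0 5]
             [seq dom_at d (5 * k + p) (5 * k + succ5 p) | p <- iota 0 5]
             (copy_colors k) (rot 1 (copy_colors k)).
Proof.
move=> hd hk hkv.
have -> : rot 1 (copy_colors k) = [seq col v (5 * k + succ5 p) | p <- iota 0 5] by [].
have compatible_map (l : seq nat) (f g : nat -> colset) (h h' : nat -> nat) :
  compatible [seq f p | p <- l] [seq g p | p <- l] [seq h p | p <- l] [seq h' p | p <- l] =
  all (fun p => has_col (h p) (f p) && ~~ ((h p == h' p) && forces (h p) (g p))) l.
  by elim: l => //= p l ->; rewrite andbA.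
rewrite /copy_colors compatible_map; apply/allP => p; rewrite mem_iota add0n => /andP [_ hp].
have hx : 5 * k + p < 30 by apply: vertex_lt.
have hy : 5 * k + succ5 p < 30 by apply: vertex_lt; rewrite ?succ5_lt.
have hvx : adj v (5 * k + p) by apply: adj_copies; rewrite copy_of_vertex // eq_sym.
have hvy : adj v (5 * k + succ5 p) by apply: adj_copies; rewrite copy_of_vertex ?succ5_lt // eq_sym.
have hxy := adj_succ k hp.
rewrite (hd _ _ v_lt hx hvx) /=; apply/negP => /andP [/eqP e hf].
have e2 := forcesP hf (hd _ _ hx hy hxy) (col_lt _ _).
by apply: (col_no_mono v_lt hx hy hvx hxy hvy); rewrite ?e2 ?e.
Qed.

Lemma copy_profiles_complete d k : sound d -> k < 6 -> k != copy_of v ->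
  exists2 q, q \in copy_profiles d v k & le_state q (profile (copy_colors k)).
Proof.
move=> hd hk hkv; apply: mem_minimal_states_below; apply: map_f.
rewrite mem_filter compatible_copy_colors //; apply: mem_words3; first by rewrite size_map size_iota.
by apply/allP => c /mapP [p _ ->]; apply: col_lt.
Qed.

Lemma locally_feasible_sound d : sound d -> locally_feasible d v.
Proof.
move=> hd; rewrite /locally_feasible; have [h1 h2 _ h4 [h5 _]] := succ_pred_vertex.
set a := col v (succ_vertex v); set b := col v (pred_vertex v).
set own := flatten _.
have hown : own_state a b \in own.
  have ha : a \in [:: 0; 1; 2] by have := col_lt v (succ_vertex v); rewrite -/a !inE; case: a => [|[|[|]]].
  have hb : b \in [:: 0; 1; 2] by have := col_lt v (pred_vertex v); rewrite -/b !inE; case: b => [|[|[|]]].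
  by apply: allpairs_f; rewrite mem_filter ?ha ?hb ?(hd _ _ v_lt h1 h2) ?(hd _ _ v_lt h4 h5).
have [s0 hs0 hl0] := mem_minimal_states_below hown.
have [||||s hs _] := @extend_states_complete d other_copies (minimal_states [::] own) (own_state a b).
- by move=> k; rewrite mem_other_copies => /andP [hk hkv]; apply: copy_profiles_complete.
- by [].
- by exists s0.
- exact: ok_actual_state.
by move: hs; case: foldl.
Qed.

End Neighbourhood.

Lemma check_cert_sound k d : check_cert d k -> sound d -> False.
Proof.
elim: k d => [u v w c k IH|u v c x k IH|u v|x|u v k0 IH0 k1 IH1 k2 IH2] d /=.
- case/and5P => hu hv hw huv /and5P [huw hvw hfu hfv hk] hd.
  apply: (IH _ hk); apply: sound_set => //.
  rewrite has_drop_col // (hd _ _ hu hv huv) /=; apply/eqP => ec.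
  have e1 := forcesP hfu (hd _ _ hu hw huw) (col_lt _ _).
  have e2 := forcesP hfv (hd _ _ hv hw hvw) (col_lt _ _).
  by apply: (col_no_mono hu hv hw huv hvw huw); rewrite ec ?e1 ?e2.
- case/and5P => hu hv hx huv /and3P [hc hl hk] hd.
  case: (col u v =P c) => [ec|nc].
  + have hc' : has_col (col u v) (only_col c) by rewrite has_only_col // ec.
    by move: hl; rewrite (locally_feasible_sound hx (sound_set hd huv hc')).
  + apply: (IH _ hk); apply: sound_set => //.
    by rewrite has_drop_col // (hd _ _ hu hv huv); apply/eqP.
- by case/and4P => hu hv huv he hd; move: (hd _ _ hu hv huv); rewrite has_no_col.
- by case/andP => hx hl hd; move: hl; rewrite (locally_feasible_sound hx hd).
- case/and5P => hu hv huv h0 /andP [h1 h2] hd.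
  have hc := hd _ _ hu hv huv.
  have hd' : sound (set_dom d u v (only_col (col u v))).
    by apply: sound_set; rewrite ?has_only_col ?eqxx.
  move: hc hd'; have := col_lt u v.
  case: (col u v) => [|[|[|]]] // _ hc hd'.
  + exact: IH0 (implyP h0 hc) hd'.
  + exact: IH1 (implyP h1 hc) hd'.
  + exact: IH2 (implyP h2 hc) hd'.
Qed.

Lemma dom_at_full_domains u v : dom_at full_domains u v = all_cols.
Proof.
rewrite /dom_at /full_domains; case: (ltnP u 30) => hu; last first.
  by rewrite (nth_default [::]) ?nth_nil ?size_map ?size_iota.
rewrite (nth_map 0) ?size_iota //; case: (ltnP v 30) => hv.
- by rewrite (nth_map 0) ?size_iota.
- by rewrite nth_default ?size_map ?size_iota.
Qed.

Lemma succ_pred_same_color v : v < 30 -> col v (succ_vertex v) = col v (pred_vertex v).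
Proof.
move=> hv; have [h1 h2 _ h4 [h5 _]] := succ_pred_vertex hv.
have hd0 : sound full_domains by move=> x y _ _ _; rewrite dom_at_full_domains has_all_cols.
have ha := col_lt v (succ_vertex v); have hb := col_lt v (pred_vertex v).
have hd : sound (set_dom (set_dom full_domains v (succ_vertex v) (only_col (col v (succ_vertex v))))
                         v (pred_vertex v) (only_col (col v (pred_vertex v)))).
  by apply: sound_set; rewrite ?has_only_col ?eqxx //; apply: sound_set; rewrite ?has_only_col ?eqxx.
move: copy_edges_agreeP => /allP /(_ v); rewrite mem_iota add0n hv => /(_ isT).
move=> /allP /(_ (col v (succ_vertex v))); rewrite mem_iota add0n ha => /(_ isT).
move=> /allP /(_ (col v (pred_vertex v))); rewrite mem_iota add0n hb => /(_ isT).
by rewrite (locally_feasible_sound hv hd) orbF => /eqP.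
Qed.

Lemma copy_edge_color k p : k < 6 -> p < 5 -> col (5 * k + p) (5 * k + succ5 p) = col (5 * k) (5 * k + 1).
Proof.
move=> hk; elim: p => [|p IH] hp; first by rewrite addn0.
have := succ_pred_same_color (vertex_lt hk hp).
rewrite /succ_vertex /pred_vertex copy_of_vertex // pos_of_vertex // => ->.
have -> : (p.+1 + 4) %% 5 = p by rewrite addSn -addnS modnDr modn_small //; lia.
by rewrite col_sym -IH; [rewrite /succ5 modn_small //; lia | lia].
Qed.

Definition copy_pattern := [seq col (5 * k) (5 * k + 1) | k <- iota 0 6].

Lemma dom_at_copy_domains pat u v : u < 30 -> v < 30 ->
  dom_at (copy_domains pat) u v = if copy_edge u v then only_col (nth 0 pat (copy_of u)) else all_cols.
Proof.
move=> hu hv; rewrite /dom_at /copy_domains (nth_map 0) ?size_iota // (nth_map 0) ?size_iota //.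
by rewrite !nth_iota.
Qed.

Lemma sound_copy_domains : sound (copy_domains copy_pattern).
Proof.
move=> u v hu hv huv; rewrite dom_at_copy_domains //.
case: ifP => [/andP [/eqP ecp _]|_]; last exact: has_all_cols.
have hk : copy_of u < 6 by rewrite -ltn30_copy.
rewrite (nth_map 0) ?size_iota // nth_iota // add0n.
suff -> : col u v = col (5 * copy_of u) (5 * copy_of u + 1) by rewrite has_only_col ?col_lt ?eqxx.
have copy_succ x y : copy_of x = copy_of u -> copy_of y = copy_of u -> pos_of y = succ5 (pos_of x) ->
    col x y = col (5 * copy_of u) (5 * copy_of u + 1).
  move=> hx hy e; rewrite [x]vertex_decomp [y]vertex_decomp hx hy e.
  exact/copy_edge_color/pos_of_lt.
move: huv; rewrite adjE -ecp eqxx /= => /orP [/eqP e|/eqP e].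
- exact: copy_succ erefl (esym ecp) e.
- by rewrite col_sym; apply: copy_succ (esym ecp) erefl e.
Qed.

End Soundness.

Definition permute_vertex (s : seq nat) x := 5 * nth 0 s (copy_of x) + pos_of x.
Definition permuted_coloring (p s : seq nat) (col : nat -> nat -> nat) x y :=
  nth 0 p (col (permute_vertex s x) (permute_vertex s y)).

Lemma perm_iota_nth_lt s n i : perm_eq s (iota 0 n) -> i < n -> nth 0 s i < n.
Proof.
move=> hp hi; have hs : size s = n by rewrite (perm_size hp) size_iota.
by have := mem_nth 0 (_ : i < size s); rewrite hs (perm_mem hp) mem_iota => /(_ hi).
Qed.

Lemma perm_iota_nth_inj s n i j : perm_eq s (iota 0 n) -> i < n -> j < n ->
  (nth 0 s i == nth 0 s j) = (i == j).
Proof.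
move=> hp hi hj; have hs : size s = n by rewrite (perm_size hp) size_iota.
by rewrite nth_uniq ?hs // (perm_uniq hp) iota_uniq.
Qed.

Lemma copy_of_permute s x : copy_of (permute_vertex s x) = nth 0 s (copy_of x).
Proof. by rewrite copy_of_vertex // pos_of_lt. Qed.

Lemma pos_of_permute s x : pos_of (permute_vertex s x) = pos_of x.
Proof. by rewrite pos_of_vertex // pos_of_lt. Qed.

Section Relabelling.
Variables (col : nat -> nat -> nat) (s p : seq nat).
Hypothesis col_sym : forall x y, col x y = col y x.
Hypothesis col_lt : forall x y, col x y < 3.
Hypothesis col_no_mono : no_mono_triangle col.
Hypothesis s_perm : perm_eq s (iota 0 6).
Hypothesis p_perm : perm_eq p (iota 0 3).

Lemma permute_vertex_lt x : x < 30 -> permute_vertex s x < 30.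
Proof. by rewrite !ltn30_copy copy_of_permute; apply: perm_iota_nth_lt. Qed.

Lemma adj_permute x y : x < 30 -> y < 30 -> adj (permute_vertex s x) (permute_vertex s y) = adj x y.
Proof.
rewrite !ltn30_copy => hx hy.
by rewrite !adjE !copy_of_permute !pos_of_permute (perm_iota_nth_inj s_perm).
Qed.

Lemma permuted_coloring_sym x y : permuted_coloring p s col x y = permuted_coloring p s col y x.
Proof. by rewrite /permuted_coloring col_sym. Qed.

Lemma permuted_coloring_lt x y : permuted_coloring p s col x y < 3.
Proof. exact: perm_iota_nth_lt. Qed.

Lemma permuted_coloring_no_mono : no_mono_triangle (permuted_coloring p s col).
Proof.
move=> x y z hx hy hz hxy hyz hxz /eqP e1 /eqP e2.
move: e1 e2; rewrite /permuted_coloring !(perm_iota_nth_inj p_perm) // => /eqP e1 /eqP e2.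
by apply: (col_no_mono (permute_vertex_lt hx) (permute_vertex_lt hy) (permute_vertex_lt hz));
  rewrite ?adj_permute.
Qed.

End Relabelling.

Definition color_perms : seq (seq nat) :=
  [:: [:: 0; 1; 2]; [:: 0; 2; 1]; [:: 1; 0; 2]; [:: 1; 2; 0]; [:: 2; 0; 1]; [:: 2; 1; 0]].

Definition color_count (p cv : seq nat) c := count (fun x => nth 0 p x == c) cv.

(* Rename colours by decreasing frequency among the copies, then list the copies by colour. *)
Definition sort_colors cv := head [:: 0; 1; 2]
  [seq p <- color_perms | (color_count p cv 1 <= color_count p cv 0) &&
                          (color_count p cv 2 <= color_count p cv 1)].

Definition sort_copies (p cv : seq nat) :=
  flatten [seq [seq k <- iota 0 6 | nth 0 p (nth 0 cv k) == c] | c <- iota 0 3].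

Definition relabel (s p cv : seq nat) := [seq nth 0 p (nth 0 cv (nth 0 s k)) | k <- iota 0 6].

Definition patterns : seq (seq nat) :=
  [:: [:: 0; 0; 0; 0; 0; 0]; [:: 0; 0; 0; 0; 0; 1]; [:: 0; 0; 0; 0; 1; 1]; [:: 0; 0; 0; 0; 1; 2];
      [:: 0; 0; 0; 1; 1; 1]; [:: 0; 0; 0; 1; 1; 2]; [:: 0; 0; 1; 1; 2; 2]].

Definition normalizes cv :=
  let p := sort_colors cv in let s := sort_copies p cv in
  [&& perm_eq s (iota 0 6), perm_eq p (iota 0 3) & relabel s p cv \in patterns].

Lemma normalizesP : all normalizes (words3 6).
Proof. by vm_compute. Qed.

Lemma copy_pattern_permuted col s p : perm_eq s (iota 0 6) ->
  copy_pattern (permuted_coloring p s col) = relabel s p (copy_pattern col).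
Proof.
move=> hs; apply/eq_in_map => k; rewrite mem_iota add0n => /andP [_ hk].
have hsk := perm_iota_nth_lt hs hk.
have [e0 e1] : copy_of (5 * k) = k /\ pos_of (5 * k) = 0.
  by rewrite -[5 * k]addn0 copy_of_vertex // pos_of_vertex.
rewrite /permuted_coloring /permute_vertex e0 e1 copy_of_vertex // pos_of_vertex // addn0.
by rewrite (nth_map 0) ?size_iota // nth_iota.
Qed.

Definition cert_000000 : cert :=
(CX 0).
Definition cert_000001 : cert :=
(CX 25).
Definition cert_000011 : cert :=
(CL 20 29 1 20 (CL 20 29 2 20 (CL 20 28 1 20 (CL 20 28 2 20 (CL 20 27 1 20 (CL 20 27 2 20 (CL 20 26 1 20 (CL 20 26 2 20 (CL 20 25 1 20 (CL 20 25 2 20 (CB 0 20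
(CT 0 29 20 0 (CT 0 28 20 0 (CT 0 27 20 0 (CT 0 26 20 0 (CT 0 25 20 0 (CT 4 20 0 0 (CT 1 20 0 0 (CL 0 29 1 0 (CL 0 28 1 0 (CL 0 27 1 0 (CL 0 26 1 0 (CL 0 25 1 0 (CL 0 21 2 0 (CL 1 21 1 1 (CL 4 21 1 4 (CL 4 20 2 20 (CL 3 20 2 20 (CL 2 20 2 20 (CL 4 21 2 21 (CT 3 21 4 0 (CT 0 21 4 0 (CL 3 21 2 21 (CT 3 20 21 1 (CT 2 20 3 0 (CT 2 21 20 1 (CL 2 21 0 21 (CL 2 21 2 21 (CE 2 21))))))))))))))))))))))))))))
(CT 0 24 20 1 (CT 0 21 20 1 (CL 0 24 2 0 (CT 4 24 0 0 (CT 1 24 0 0 (CL 0 21 2 0 (CT 4 21 0 0 (CT 1 21 0 0 (CL 1 23 1 1 (CL 1 22 1 1 (CL 1 20 1 1 (CL 4 23 1 4 (CL 4 22 1 4 (CL 4 20 1 4 (CL 4 20 2 20 (CT 3 20 4 0 (CL 3 20 2 20 (CT 3 21 20 1 (CL 2 20 0 20 (CL 2 20 2 20 (CT 2 21 20 1 (CX 21))))))))))))))))))))))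
(CL 0 24 1 0 (CL 0 23 1 0 (CL 0 22 1 0 (CL 0 21 1 0 (CL 4 20 0 20 (CL 4 20 1 20 (CL 1 20 0 20 (CL 1 20 1 20 (CL 4 21 0 21 (CL 1 21 0 21 (CL 4 22 0 22 (CL 1 22 0 22 (CL 4 23 0 23 (CL 1 23 0 23 (CL 4 24 0 24 (CL 1 24 0 24 (CL 1 29 2 1 (CL 1 28 2 1 (CL 1 27 2 1 (CL 1 26 2 1 (CL 1 25 2 1 (CL 4 29 2 4 (CL 4 28 2 4 (CL 4 27 2 4 (CL 4 26 2 4 (CL 4 25 2 4 (CL 0 25 2 25 (CL 3 26 2 26 (CL 3 27 2 27 (CL 3 28 2 28 (CL 2 28 2 28 (CL 3 29 2 29 (CL 2 29 2 29 (CL 0 29 2 29 (CB 0 25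
(CT 4 25 0 0 (CT 4 29 25 1 (CT 3 29 4 0 (CT 3 28 29 1 (CT 4 28 3 0 (CT 4 27 28 1 (CT 3 27 4 0 (CT 3 26 27 1 (CT 4 26 3 0 (CT 25 26 4 1 (CE 25 26)))))))))))
(CT 0 29 25 1 (CT 4 29 0 0 (CT 4 28 29 1 (CT 3 28 4 0 (CT 3 29 28 1 (CT 2 29 3 0 (CT 2 28 29 1 (CT 1 28 2 0 (CT 1 29 28 1 (CT 0 29 1 0 (CE 0 29)))))))))))
(CE 0 0))))))))))))))))))))))))))))))))))))))))))))))).
Definition cert_000012 : cert :=
(CL 20 29 1 20 (CL 20 29 2 20 (CL 20 28 1 20 (CL 20 28 2 20 (CL 20 27 1 20 (CL 20 27 2 20 (CL 20 26 1 20 (CL 20 26 2 20 (CL 20 25 1 20 (CL 20 25 2 20 (CB 0 20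
(CT 0 29 20 0 (CT 0 28 20 0 (CT 0 27 20 0 (CT 0 26 20 0 (CT 0 25 20 0 (CT 4 20 0 0 (CT 1 20 0 0 (CL 0 29 2 0 (CL 0 28 2 0 (CL 0 27 2 0 (CL 0 26 2 0 (CL 0 25 2 0 (CL 0 21 1 0 (CL 1 21 1 1 (CL 4 21 1 4 (CL 4 20 2 20 (CL 1 20 2 20 (CL 4 21 0 21 (CL 3 21 0 21 (CL 3 21 1 21 (CL 2 21 0 21 (CL 2 21 1 21 (CL 1 21 0 21 (CX 1))))))))))))))))))))))))
(CT 0 24 20 1 (CT 0 21 20 1 (CL 0 24 2 0 (CT 4 24 0 0 (CT 1 24 0 0 (CL 0 21 2 0 (CT 4 21 0 0 (CT 1 21 0 0 (CL 1 23 1 1 (CL 1 22 1 1 (CL 1 20 1 1 (CL 4 23 1 4 (CL 4 22 1 4 (CL 4 20 1 4 (CL 4 20 2 20 (CT 3 20 4 0 (CL 3 20 2 20 (CT 3 21 20 1 (CL 2 20 0 20 (CL 2 20 2 20 (CT 2 21 20 1 (CX 21))))))))))))))))))))))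
(CL 0 24 1 0 (CL 0 23 1 0 (CL 0 22 1 0 (CL 0 21 1 0 (CL 4 20 0 20 (CL 4 20 1 20 (CL 1 20 0 20 (CL 1 20 1 20 (CL 4 21 0 21 (CL 1 21 0 21 (CL 4 22 0 22 (CL 1 22 0 22 (CL 4 23 0 23 (CL 1 23 0 23 (CL 4 24 0 24 (CL 1 24 0 24 (CL 1 26 2 1 (CL 1 25 2 1 (CL 1 21 1 1 (CL 4 26 2 4 (CL 4 25 2 4 (CL 0 21 0 21 (CL 3 25 0 25 (CL 2 25 0 25 (CL 0 25 0 25 (CL 3 26 0 26 (CL 2 26 0 26 (CL 0 26 0 26 (CX 0)))))))))))))))))))))))))))))))))))))))).
Definition cert_000111 : cert :=
(CB 0 5
(CT 0 9 5 0 (CT 1 5 0 0 (CL 0 14 2 0 (CL 0 13 2 0 (CL 0 12 2 0 (CL 0 11 2 0 (CL 0 10 2 0 (CL 0 9 2 0 (CL 0 8 2 0 (CL 0 7 2 0 (CL 5 14 2 5 (CL 5 13 2 5 (CL 5 12 2 5 (CL 5 11 2 5 (CL 5 10 2 5 (CL 9 10 2 10 (CL 9 11 2 11 (CL 9 12 2 12 (CL 9 13 2 13 (CL 9 14 2 14 (CB 0 7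
(CB 0 10
(CT 0 14 10 0 (CT 9 14 0 1 (CT 9 13 14 0 (CT 0 13 9 1 (CT 0 12 13 0 (CT 9 12 0 1 (CT 9 11 12 0 (CT 0 11 9 1 (CT 10 11 0 0 (CE 10 11))))))))))
(CT 9 10 0 1 (CT 9 14 10 0 (CT 0 14 9 1 (CT 0 13 14 0 (CT 9 13 0 1 (CT 9 12 13 0 (CT 0 12 9 1 (CT 0 11 12 0 (CT 9 11 0 1 (CT 10 11 9 0 (CE 10 11)))))))))))
(CE 0 0))
(CB 0 8
(CB 0 10
(CT 0 14 10 0 (CT 9 14 0 1 (CT 9 13 14 0 (CT 0 13 9 1 (CT 0 12 13 0 (CT 9 12 0 1 (CT 9 11 12 0 (CT 0 11 9 1 (CT 10 11 0 0 (CE 10 11))))))))))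
(CT 9 10 0 1 (CT 9 14 10 0 (CT 0 14 9 1 (CT 0 13 14 0 (CT 9 13 0 1 (CT 9 12 13 0 (CT 0 12 9 1 (CT 0 11 12 0 (CT 9 11 0 1 (CT 10 11 9 0 (CE 10 11)))))))))))
(CE 0 0))
(CB 0 10
(CT 0 14 10 0 (CT 9 14 0 1 (CT 9 13 14 0 (CT 0 13 9 1 (CT 0 12 13 0 (CT 9 12 0 1 (CT 9 11 12 0 (CT 0 11 9 1 (CT 10 11 0 0 (CE 10 11))))))))))
(CT 9 10 0 1 (CT 9 14 10 0 (CT 0 14 9 1 (CT 0 13 14 0 (CT 9 13 0 1 (CT 9 12 13 0 (CT 0 12 9 1 (CT 0 11 12 0 (CT 9 11 0 1 (CT 10 11 9 0 (CE 10 11)))))))))))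
(CE 0 0))
(CE 0 0))
(CE 0 0))))))))))))))))))))))
(CL 0 9 2 0 (CL 0 8 2 0 (CL 0 7 2 0 (CL 0 6 2 0 (CL 4 5 2 5 (CL 3 5 2 5 (CL 2 5 2 5 (CL 1 5 2 5 (CL 4 6 2 6 (CL 3 6 2 6 (CL 2 6 2 6 (CL 1 6 2 6 (CL 4 7 2 7 (CL 3 7 2 7 (CL 2 7 2 7 (CL 1 7 2 7 (CL 4 8 2 8 (CL 3 8 2 8 (CL 2 8 2 8 (CL 1 8 2 8 (CL 4 9 2 9 (CL 3 9 2 9 (CL 2 9 2 9 (CL 1 9 2 9 (CB 0 6
(CT 1 6 0 0 (CL 0 14 2 0 (CL 0 13 2 0 (CL 0 12 2 0 (CL 0 11 2 0 (CL 0 10 2 0 (CL 6 14 2 6 (CL 6 13 2 6 (CL 6 12 2 6 (CL 6 11 2 6 (CL 6 10 2 6 (CL 9 10 2 10 (CL 8 10 2 10 (CL 9 11 2 11 (CL 8 11 2 11 (CL 9 12 2 12 (CL 8 12 2 12 (CL 9 13 2 13 (CL 8 13 2 13 (CL 9 14 2 14 (CL 8 14 2 14 (CB 0 8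
(CT 0 9 8 0 (CB 0 10
(CT 0 14 10 0 (CT 9 14 0 1 (CT 9 13 14 0 (CT 0 13 9 1 (CT 0 12 13 0 (CT 9 12 0 1 (CT 9 11 12 0 (CT 0 11 9 1 (CT 10 11 0 0 (CE 10 11))))))))))
(CT 9 10 0 1 (CT 9 14 10 0 (CT 0 14 9 1 (CT 0 13 14 0 (CT 9 13 0 1 (CT 9 12 13 0 (CT 0 12 9 1 (CT 0 11 12 0 (CT 9 11 0 1 (CT 10 11 9 0 (CE 10 11)))))))))))
(CE 0 0)))
(CB 0 9
(CB 0 10
(CT 0 14 10 0 (CT 8 14 0 1 (CT 8 13 14 0 (CT 0 13 8 1 (CT 0 12 13 0 (CT 8 12 0 1 (CT 8 11 12 0 (CT 0 11 8 1 (CT 10 11 0 0 (CE 10 11))))))))))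
(CT 8 10 0 1 (CT 8 14 10 0 (CT 0 14 8 1 (CT 0 13 14 0 (CT 8 13 0 1 (CT 8 12 13 0 (CT 0 12 8 1 (CT 0 11 12 0 (CT 8 11 0 1 (CT 10 11 8 0 (CE 10 11)))))))))))
(CE 0 0))
(CB 0 10
(CT 0 14 10 0 (CT 9 14 0 1 (CT 9 13 14 0 (CT 0 13 9 1 (CT 0 12 13 0 (CT 9 12 0 1 (CT 9 11 12 0 (CT 0 11 9 1 (CT 10 11 0 0 (CE 10 11))))))))))
(CT 9 10 0 1 (CT 9 14 10 0 (CT 0 14 9 1 (CT 0 13 14 0 (CT 9 13 0 1 (CT 9 12 13 0 (CT 0 12 9 1 (CT 0 11 12 0 (CT 9 11 0 1 (CT 10 11 9 0 (CE 10 11)))))))))))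
(CE 0 0))
(CE 0 0))
(CE 0 0)))))))))))))))))))))))
(CB 0 7
(CT 0 8 7 0 (CT 1 7 0 0 (CL 0 14 2 0 (CL 0 13 2 0 (CL 0 12 2 0 (CL 0 11 2 0 (CL 0 10 2 0 (CL 7 14 2 7 (CL 7 13 2 7 (CL 7 12 2 7 (CL 7 11 2 7 (CL 7 10 2 7 (CL 9 10 2 10 (CL 8 10 2 10 (CL 9 11 2 11 (CL 8 11 2 11 (CL 9 12 2 12 (CL 8 12 2 12 (CL 9 13 2 13 (CL 8 13 2 13 (CL 9 14 2 14 (CL 8 14 2 14 (CB 0 9
(CB 0 10
(CT 0 14 10 0 (CT 8 14 0 1 (CT 8 13 14 0 (CT 0 13 8 1 (CT 0 12 13 0 (CT 8 12 0 1 (CT 8 11 12 0 (CT 0 11 8 1 (CT 10 11 0 0 (CE 10 11))))))))))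
(CT 8 10 0 1 (CT 8 14 10 0 (CT 0 14 8 1 (CT 0 13 14 0 (CT 8 13 0 1 (CT 8 12 13 0 (CT 0 12 8 1 (CT 0 11 12 0 (CT 8 11 0 1 (CT 10 11 8 0 (CE 10 11)))))))))))
(CE 0 0))
(CB 0 10
(CT 0 14 10 0 (CT 9 14 0 1 (CT 9 13 14 0 (CT 0 13 9 1 (CT 0 12 13 0 (CT 9 12 0 1 (CT 9 11 12 0 (CT 0 11 9 1 (CT 10 11 0 0 (CE 10 11))))))))))
(CT 9 10 0 1 (CT 9 14 10 0 (CT 0 14 9 1 (CT 0 13 14 0 (CT 9 13 0 1 (CT 9 12 13 0 (CT 0 12 9 1 (CT 0 11 12 0 (CT 9 11 0 1 (CT 10 11 9 0 (CE 10 11)))))))))))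
(CE 0 0))
(CE 0 0))))))))))))))))))))))))
(CB 0 8
(CT 0 9 8 0 (CT 1 8 0 0 (CL 0 14 2 0 (CL 0 13 2 0 (CL 0 12 2 0 (CL 0 11 2 0 (CL 0 10 2 0 (CL 8 14 2 8 (CL 8 13 2 8 (CL 8 12 2 8 (CL 8 11 2 8 (CL 8 10 2 8 (CL 9 10 2 10 (CL 9 11 2 11 (CL 9 12 2 12 (CL 9 13 2 13 (CL 9 14 2 14 (CB 0 10
(CT 0 14 10 0 (CT 9 14 0 1 (CT 9 13 14 0 (CT 0 13 9 1 (CT 0 12 13 0 (CT 9 12 0 1 (CT 9 11 12 0 (CT 0 11 9 1 (CT 10 11 0 0 (CE 10 11))))))))))
(CT 9 10 0 1 (CT 9 14 10 0 (CT 0 14 9 1 (CT 0 13 14 0 (CT 9 13 0 1 (CT 9 12 13 0 (CT 0 12 9 1 (CT 0 11 12 0 (CT 9 11 0 1 (CT 10 11 9 0 (CE 10 11)))))))))))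
(CE 0 0)))))))))))))))))))
(CB 0 9
(CT 1 9 0 0 (CL 0 14 2 0 (CL 0 13 2 0 (CL 0 12 2 0 (CL 0 11 2 0 (CL 0 10 2 0 (CL 9 14 2 9 (CL 9 13 2 9 (CL 9 12 2 9 (CL 9 11 2 9 (CL 9 10 2 9 (CL 8 10 2 10 (CL 8 11 2 11 (CL 8 12 2 12 (CL 8 13 2 13 (CL 8 14 2 14 (CB 0 10
(CT 0 14 10 0 (CT 8 14 0 1 (CT 8 13 14 0 (CT 0 13 8 1 (CT 0 12 13 0 (CT 8 12 0 1 (CT 8 11 12 0 (CT 0 11 8 1 (CT 10 11 0 0 (CE 10 11))))))))))
(CT 8 10 0 1 (CT 8 14 10 0 (CT 0 14 8 1 (CT 0 13 14 0 (CT 8 13 0 1 (CT 8 12 13 0 (CT 0 12 8 1 (CT 0 11 12 0 (CT 8 11 0 1 (CT 10 11 8 0 (CE 10 11)))))))))))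
(CE 0 0))))))))))))))))))
(CB 1 5
(CT 1 9 5 0 (CT 1 6 5 0 (CL 1 14 2 1 (CL 1 13 2 1 (CL 1 12 2 1 (CL 1 11 2 1 (CL 1 10 2 1 (CL 4 10 2 10 (CL 3 10 2 10 (CL 2 10 2 10 (CL 0 10 2 10 (CL 4 11 2 11 (CL 3 11 2 11 (CL 2 11 2 11 (CL 0 11 2 11 (CL 0 29 1 0 (CL 0 28 1 0 (CL 0 27 1 0 (CL 0 26 1 0 (CL 0 25 1 0 (CL 0 24 1 0 (CL 0 23 1 0 (CL 0 22 1 0 (CL 0 21 1 0 (CL 0 20 1 0 (CL 0 19 1 0 (CL 0 18 1 0 (CL 0 17 1 0 (CL 0 16 1 0 (CL 0 15 1 0 (CL 1 15 0 15 (CL 1 16 0 16 (CL 1 17 0 17 (CL 1 18 0 18 (CL 1 19 0 19 (CL 1 20 0 20 (CL 1 21 0 21 (CL 1 22 0 22 (CL 1 23 0 23 (CL 1 24 0 24 (CL 1 25 0 25 (CL 1 26 0 26 (CL 1 27 0 27 (CL 1 28 0 28 (CL 1 29 0 29 (CX 1))))))))))))))))))))))))))))))))))))))))))))))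
(CB 2 5
(CT 2 6 5 0 (CL 2 14 2 2 (CL 2 13 2 2 (CL 2 12 2 2 (CL 2 11 2 2 (CL 2 10 2 2 (CL 3 10 2 10 (CL 1 10 2 10 (CL 0 10 2 10 (CL 3 11 2 11 (CL 1 11 2 11 (CL 0 11 2 11 (CL 0 29 1 0 (CL 0 28 1 0 (CL 0 27 1 0 (CL 0 26 1 0 (CL 0 25 1 0 (CL 0 24 1 0 (CL 0 23 1 0 (CL 0 22 1 0 (CL 0 21 1 0 (CL 0 20 1 0 (CL 0 19 1 0 (CL 0 18 1 0 (CL 0 17 1 0 (CL 0 16 1 0 (CL 0 15 1 0 (CL 1 15 0 15 (CL 1 16 0 16 (CL 1 17 0 17 (CL 1 18 0 18 (CL 1 19 0 19 (CL 1 20 0 20 (CL 1 21 0 21 (CL 1 22 0 22 (CL 1 23 0 23 (CL 1 24 0 24 (CL 1 25 0 25 (CL 1 26 0 26 (CL 1 27 0 27 (CL 1 28 0 28 (CL 1 29 0 29 (CX 1)))))))))))))))))))))))))))))))))))))))))))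
(CB 3 5
(CT 3 6 5 0 (CL 3 14 2 3 (CL 3 13 2 3 (CL 3 12 2 3 (CL 3 11 2 3 (CL 3 10 2 3 (CL 4 10 2 10 (CL 2 10 2 10 (CL 1 10 2 10 (CL 0 10 2 10 (CL 4 11 2 11 (CL 2 11 2 11 (CL 1 11 2 11 (CL 0 11 2 11 (CL 0 29 1 0 (CL 0 28 1 0 (CL 0 27 1 0 (CL 0 26 1 0 (CL 0 25 1 0 (CL 0 24 1 0 (CL 0 23 1 0 (CL 0 22 1 0 (CL 0 21 1 0 (CL 0 20 1 0 (CL 0 19 1 0 (CL 0 18 1 0 (CL 0 17 1 0 (CL 0 16 1 0 (CL 0 15 1 0 (CL 1 15 0 15 (CL 1 16 0 16 (CL 1 17 0 17 (CL 1 18 0 18 (CL 1 19 0 19 (CL 1 20 0 20 (CL 1 21 0 21 (CL 1 22 0 22 (CL 1 23 0 23 (CL 1 24 0 24 (CL 1 25 0 25 (CL 1 26 0 26 (CL 1 27 0 27 (CL 1 28 0 28 (CL 1 29 0 29 (CX 1)))))))))))))))))))))))))))))))))))))))))))))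
(CB 4 5
(CT 4 6 5 0 (CL 4 14 2 4 (CL 4 13 2 4 (CL 4 12 2 4 (CL 4 11 2 4 (CL 4 10 2 4 (CL 3 10 2 10 (CL 2 10 2 10 (CL 1 10 2 10 (CL 0 10 2 10 (CL 3 11 2 11 (CL 2 11 2 11 (CL 1 11 2 11 (CL 0 11 2 11 (CL 0 29 1 0 (CL 0 28 1 0 (CL 0 27 1 0 (CL 0 26 1 0 (CL 0 25 1 0 (CL 0 24 1 0 (CL 0 23 1 0 (CL 0 22 1 0 (CL 0 21 1 0 (CL 0 20 1 0 (CL 0 19 1 0 (CL 0 18 1 0 (CL 0 17 1 0 (CL 0 16 1 0 (CL 0 15 1 0 (CL 1 15 0 15 (CL 1 16 0 16 (CL 1 17 0 17 (CL 1 18 0 18 (CL 1 19 0 19 (CL 1 20 0 20 (CL 1 21 0 21 (CL 1 22 0 22 (CL 1 23 0 23 (CL 1 24 0 24 (CL 1 25 0 25 (CL 1 26 0 26 (CL 1 27 0 27 (CL 1 28 0 28 (CL 1 29 0 29 (CX 1)))))))))))))))))))))))))))))))))))))))))))))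
(CB 1 6
(CT 1 7 6 0 (CL 1 14 2 1 (CL 1 13 2 1 (CL 1 12 2 1 (CL 1 11 2 1 (CL 1 10 2 1 (CL 4 10 2 10 (CL 3 10 2 10 (CL 2 10 2 10 (CL 0 10 2 10 (CL 4 11 2 11 (CL 3 11 2 11 (CL 2 11 2 11 (CL 0 11 2 11 (CL 0 29 1 0 (CL 0 28 1 0 (CL 0 27 1 0 (CL 0 26 1 0 (CL 0 25 1 0 (CL 0 24 1 0 (CL 0 23 1 0 (CL 0 22 1 0 (CL 0 21 1 0 (CL 0 20 1 0 (CL 0 19 1 0 (CL 0 18 1 0 (CL 0 17 1 0 (CL 0 16 1 0 (CL 0 15 1 0 (CL 1 15 0 15 (CL 1 16 0 16 (CL 1 17 0 17 (CL 1 18 0 18 (CL 1 19 0 19 (CL 1 20 0 20 (CL 1 21 0 21 (CL 1 22 0 22 (CL 1 23 0 23 (CL 1 24 0 24 (CL 1 25 0 25 (CL 1 26 0 26 (CL 1 27 0 27 (CL 1 28 0 28 (CL 1 29 0 29 (CX 1)))))))))))))))))))))))))))))))))))))))))))))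
(CB 1 7
(CL 1 14 2 1 (CL 1 13 2 1 (CL 1 12 2 1 (CL 1 11 2 1 (CL 1 10 2 1 (CL 4 10 2 10 (CL 3 10 2 10 (CL 2 10 2 10 (CL 0 10 2 10 (CL 4 11 2 11 (CL 3 11 2 11 (CL 2 11 2 11 (CL 0 11 2 11 (CL 0 29 1 0 (CL 0 28 1 0 (CL 0 27 1 0 (CL 0 26 1 0 (CL 0 25 1 0 (CL 0 24 1 0 (CL 0 23 1 0 (CL 0 22 1 0 (CL 0 21 1 0 (CL 0 20 1 0 (CL 0 19 1 0 (CL 0 18 1 0 (CL 0 17 1 0 (CL 0 16 1 0 (CL 0 15 1 0 (CL 1 15 0 15 (CL 1 16 0 16 (CL 1 17 0 17 (CL 1 18 0 18 (CL 1 19 0 19 (CL 1 20 0 20 (CL 1 21 0 21 (CL 1 22 0 22 (CL 1 23 0 23 (CL 1 24 0 24 (CL 1 25 0 25 (CL 1 26 0 26 (CL 1 27 0 27 (CL 1 28 0 28 (CL 1 29 0 29 (CX 1))))))))))))))))))))))))))))))))))))))))))))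
(CB 1 8
(CL 1 14 2 1 (CL 1 13 2 1 (CL 1 12 2 1 (CL 1 11 2 1 (CL 1 10 2 1 (CL 4 10 2 10 (CL 3 10 2 10 (CL 2 10 2 10 (CL 0 10 2 10 (CL 4 11 2 11 (CL 3 11 2 11 (CL 2 11 2 11 (CL 0 11 2 11 (CL 0 29 1 0 (CL 0 28 1 0 (CL 0 27 1 0 (CL 0 26 1 0 (CL 0 25 1 0 (CL 0 24 1 0 (CL 0 23 1 0 (CL 0 22 1 0 (CL 0 21 1 0 (CL 0 20 1 0 (CL 0 19 1 0 (CL 0 18 1 0 (CL 0 17 1 0 (CL 0 16 1 0 (CL 0 15 1 0 (CL 1 15 0 15 (CL 1 16 0 16 (CL 1 17 0 17 (CL 1 18 0 18 (CL 1 19 0 19 (CL 1 20 0 20 (CL 1 21 0 21 (CL 1 22 0 22 (CL 1 23 0 23 (CL 1 24 0 24 (CL 1 25 0 25 (CL 1 26 0 26 (CL 1 27 0 27 (CL 1 28 0 28 (CL 1 29 0 29 (CX 1))))))))))))))))))))))))))))))))))))))))))))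
(CB 1 9
(CL 1 14 2 1 (CL 1 13 2 1 (CL 1 12 2 1 (CL 1 11 2 1 (CL 1 10 2 1 (CL 4 10 2 10 (CL 3 10 2 10 (CL 2 10 2 10 (CL 0 10 2 10 (CL 4 11 2 11 (CL 3 11 2 11 (CL 2 11 2 11 (CL 0 11 2 11 (CL 0 29 1 0 (CL 0 28 1 0 (CL 0 27 1 0 (CL 0 26 1 0 (CL 0 25 1 0 (CL 0 24 1 0 (CL 0 23 1 0 (CL 0 22 1 0 (CL 0 21 1 0 (CL 0 20 1 0 (CL 0 19 1 0 (CL 0 18 1 0 (CL 0 17 1 0 (CL 0 16 1 0 (CL 0 15 1 0 (CL 1 15 0 15 (CL 1 16 0 16 (CL 1 17 0 17 (CL 1 18 0 18 (CL 1 19 0 19 (CL 1 20 0 20 (CL 1 21 0 21 (CL 1 22 0 22 (CL 1 23 0 23 (CL 1 24 0 24 (CL 1 25 0 25 (CL 1 26 0 26 (CL 1 27 0 27 (CL 1 28 0 28 (CL 1 29 0 29 (CX 1))))))))))))))))))))))))))))))))))))))))))))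
(CB 2 6
(CL 2 14 2 2 (CL 2 13 2 2 (CL 2 12 2 2 (CL 2 11 2 2 (CL 2 10 2 2 (CL 3 10 2 10 (CL 1 10 2 10 (CL 0 10 2 10 (CL 3 11 2 11 (CL 1 11 2 11 (CL 0 11 2 11 (CL 0 25 1 0 (CL 0 21 1 0 (CL 0 20 1 0 (CL 0 19 1 0 (CL 0 18 1 0 (CL 0 17 1 0 (CL 0 16 1 0 (CL 0 15 1 0 (CL 1 25 1 1 (CL 1 21 1 1 (CL 1 20 1 1 (CL 1 19 1 1 (CL 1 18 1 1 (CL 1 17 1 1 (CL 1 16 1 1 (CL 1 15 1 1 (CL 4 15 0 15 (CL 3 15 0 15 (CL 2 15 0 15 (CL 1 15 0 15 (CL 0 15 0 15 (CL 4 16 0 16 (CL 3 16 0 16 (CL 2 16 0 16 (CL 1 16 0 16 (CL 0 16 0 16 (CL 4 17 0 17 (CL 3 17 0 17 (CL 2 17 0 17 (CL 1 17 0 17 (CL 0 17 0 17 (CL 4 18 0 18 (CL 3 18 0 18 (CL 2 18 0 18 (CL 1 18 0 18 (CL 0 18 0 18 (CL 4 19 0 19 (CL 3 19 0 19 (CL 2 19 0 19 (CL 1 19 0 19 (CL 0 19 0 19 (CL 4 20 0 20 (CL 3 20 0 20 (CL 2 20 0 20 (CL 1 20 0 20 (CL 0 20 0 20 (CL 4 21 0 21 (CL 3 21 0 21 (CL 2 21 0 21 (CL 1 21 0 21 (CL 0 21 0 21 (CL 4 25 0 25 (CL 3 25 0 25 (CL 2 25 0 25 (CL 1 25 0 25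 (CL 0 25 0 25 (CX 0))))))))))))))))))))))))))))))))))))))))))))))))))))))))))))))))))))
(CB 3 6
(CL 3 14 2 3 (CL 3 13 2 3 (CL 3 12 2 3 (CL 3 11 2 3 (CL 3 10 2 3 (CL 4 10 2 10 (CL 2 10 2 10 (CL 1 10 2 10 (CL 0 10 2 10 (CL 4 11 2 11 (CL 2 11 2 11 (CL 1 11 2 11 (CL 0 11 2 11 (CL 0 25 1 0 (CL 0 21 1 0 (CL 0 20 1 0 (CL 0 19 1 0 (CL 0 18 1 0 (CL 0 17 1 0 (CL 0 16 1 0 (CL 0 15 1 0 (CL 1 25 1 1 (CL 1 21 1 1 (CL 1 20 1 1 (CL 1 19 1 1 (CL 1 18 1 1 (CL 1 17 1 1 (CL 1 16 1 1 (CL 1 15 1 1 (CL 4 15 0 15 (CL 3 15 0 15 (CL 2 15 0 15 (CL 1 15 0 15 (CL 0 15 0 15 (CL 4 16 0 16 (CL 3 16 0 16 (CL 2 16 0 16 (CL 1 16 0 16 (CL 0 16 0 16 (CL 4 17 0 17 (CL 3 17 0 17 (CL 2 17 0 17 (CL 1 17 0 17 (CL 0 17 0 17 (CL 4 18 0 18 (CL 3 18 0 18 (CL 2 18 0 18 (CL 1 18 0 18 (CL 0 18 0 18 (CL 4 19 0 19 (CL 3 19 0 19 (CL 2 19 0 19 (CL 1 19 0 19 (CL 0 19 0 19 (CL 4 20 0 20 (CL 3 20 0 20 (CL 2 20 0 20 (CL 1 20 0 20 (CL 0 20 0 20 (CL 4 21 0 21 (CL 3 21 0 21 (CL 2 21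 0 21 (CL 1 21 0 21 (CL 0 21 0 21 (CL 4 25 0 25 (CL 3 25 0 25 (CL 2 25 0 25 (CL 1 25 0 25 (CL 0 25 0 25 (CX 0))))))))))))))))))))))))))))))))))))))))))))))))))))))))))))))))))))))
(CB 4 6
(CL 4 14 2 4 (CL 4 13 2 4 (CL 4 12 2 4 (CL 4 11 2 4 (CL 4 10 2 4 (CL 3 10 2 10 (CL 2 10 2 10 (CL 1 10 2 10 (CL 0 10 2 10 (CL 3 11 2 11 (CL 2 11 2 11 (CL 1 11 2 11 (CL 0 11 2 11 (CL 0 25 1 0 (CL 0 21 1 0 (CL 0 20 1 0 (CL 0 19 1 0 (CL 0 18 1 0 (CL 0 17 1 0 (CL 0 16 1 0 (CL 0 15 1 0 (CL 1 25 1 1 (CL 1 21 1 1 (CL 1 20 1 1 (CL 1 19 1 1 (CL 1 18 1 1 (CL 1 17 1 1 (CL 1 16 1 1 (CL 1 15 1 1 (CL 4 15 0 15 (CL 3 15 0 15 (CL 2 15 0 15 (CL 1 15 0 15 (CL 0 15 0 15 (CL 4 16 0 16 (CL 3 16 0 16 (CL 2 16 0 16 (CL 1 16 0 16 (CL 0 16 0 16 (CL 4 17 0 17 (CL 3 17 0 17 (CL 2 17 0 17 (CL 1 17 0 17 (CL 0 17 0 17 (CL 4 18 0 18 (CL 3 18 0 18 (CL 2 18 0 18 (CL 1 18 0 18 (CL 0 18 0 18 (CL 4 19 0 19 (CL 3 19 0 19 (CL 2 19 0 19 (CL 1 19 0 19 (CL 0 19 0 19 (CL 4 20 0 20 (CL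 3 20 0 20 (CL 2 20 0 20 (CL 1 20 0 20 (CL 0 20 0 20 (CL 4 21 0 21 (CL 3 21 0 21 (CL 2 21 0 21 (CL 1 21 0 21 (CL 0 21 0 21 (CL 4 25 0 25 (CL 3 25 0 25 (CL 2 25 0 25 (CL 1 25 0 25 (CL 0 25 0 25 (CX 0))))))))))))))))))))))))))))))))))))))))))))))))))))))))))))))))))))))
(CB 2 7
(CL 2 14 2 2 (CL 2 13 2 2 (CL 2 12 2 2 (CL 2 11 2 2 (CL 2 10 2 2 (CL 3 10 2 10 (CL 1 10 2 10 (CL 0 10 2 10 (CL 3 11 2 11 (CL 1 11 2 11 (CL 0 11 2 11 (CL 0 25 1 0 (CL 0 21 1 0 (CL 0 20 1 0 (CL 0 19 1 0 (CL 0 18 1 0 (CL 0 17 1 0 (CL 0 16 1 0 (CL 0 15 1 0 (CL 1 25 1 1 (CL 1 21 1 1 (CL 1 20 1 1 (CL 1 19 1 1 (CL 1 18 1 1 (CL 1 17 1 1 (CL 1 16 1 1 (CL 1 15 1 1 (CL 4 15 0 15 (CL 3 15 0 15 (CL 2 15 0 15 (CL 1 15 0 15 (CL 0 15 0 15 (CL 4 16 0 16 (CL 3 16 0 16 (CL 2 16 0 16 (CL 1 16 0 16 (CL 0 16 0 16 (CL 4 17 0 17 (CL 3 17 0 17 (CL 2 17 0 17 (CL 1 17 0 17 (CL 0 17 0 17 (CL 4 18 0 18 (CL 3 18 0 18 (CL 2 18 0 18 (CL 1 18 0 18 (CL 0 18 0 18 (CL 4 19 0 19 (CL 3 19 0 19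 (CL 2 19 0 19 (CL 1 19 0 19 (CL 0 19 0 19 (CL 4 20 0 20 (CL 3 20 0 20 (CL 2 20 0 20 (CL 1 20 0 20 (CL 0 20 0 20 (CL 4 21 0 21 (CL 3 21 0 21 (CL 2 21 0 21 (CL 1 21 0 21 (CL 0 21 0 21 (CL 4 25 0 25 (CL 3 25 0 25 (CL 2 25 0 25 (CL 1 25 0 25 (CL 0 25 0 25 (CX 0))))))))))))))))))))))))))))))))))))))))))))))))))))))))))))))))))))
(CB 2 8
(CL 2 14 2 2 (CL 2 13 2 2 (CL 2 12 2 2 (CL 2 11 2 2 (CL 2 10 2 2 (CL 3 10 2 10 (CL 1 10 2 10 (CL 0 10 2 10 (CL 3 11 2 11 (CL 1 11 2 11 (CL 0 11 2 11 (CL 0 25 1 0 (CL 0 21 1 0 (CL 0 20 1 0 (CL 0 19 1 0 (CL 0 18 1 0 (CL 0 17 1 0 (CL 0 16 1 0 (CL 0 15 1 0 (CL 1 25 1 1 (CL 1 21 1 1 (CL 1 20 1 1 (CL 1 19 1 1 (CL 1 18 1 1 (CL 1 17 1 1 (CL 1 16 1 1 (CL 1 15 1 1 (CL 4 15 0 15 (CL 3 15 0 15 (CL 2 15 0 15 (CL 1 15 0 15 (CL 0 15 0 15 (CL 4 16 0 16 (CL 3 16 0 16 (CL 2 16 0 16 (CL 1 16 0 16 (CL 0 16 0 16 (CL 4 17 0 17 (CL 3 17 0 17 (CL 2 17 0 17 (CL 1 17 0 17 (CL 0 17 0 17 (CL 4 18 0 18 (CL 3 18 0 18 (CL 2 18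 0 18 (CL 1 18 0 18 (CL 0 18 0 18 (CL 4 19 0 19 (CL 3 19 0 19 (CL 2 19 0 19 (CL 1 19 0 19 (CL 0 19 0 19 (CL 4 20 0 20 (CL 3 20 0 20 (CL 2 20 0 20 (CL 1 20 0 20 (CL 0 20 0 20 (CL 4 21 0 21 (CL 3 21 0 21 (CL 2 21 0 21 (CL 1 21 0 21 (CL 0 21 0 21 (CL 4 25 0 25 (CL 3 25 0 25 (CL 2 25 0 25 (CL 1 25 0 25 (CL 0 25 0 25 (CX 0))))))))))))))))))))))))))))))))))))))))))))))))))))))))))))))))))))
(CB 2 9
(CL 2 14 2 2 (CL 2 13 2 2 (CL 2 12 2 2 (CL 2 11 2 2 (CL 2 10 2 2 (CL 3 10 2 10 (CL 1 10 2 10 (CL 0 10 2 10 (CL 3 11 2 11 (CL 1 11 2 11 (CL 0 11 2 11 (CL 0 25 1 0 (CL 0 21 1 0 (CL 0 20 1 0 (CL 0 19 1 0 (CL 0 18 1 0 (CL 0 17 1 0 (CL 0 16 1 0 (CL 0 15 1 0 (CL 1 25 1 1 (CL 1 21 1 1 (CL 1 20 1 1 (CL 1 19 1 1 (CL 1 18 1 1 (CL 1 17 1 1 (CL 1 16 1 1 (CL 1 15 1 1 (CL 4 15 0 15 (CL 3 15 0 15 (CL 2 15 0 15 (CL 1 15 0 15 (CL 0 15 0 15 (CL 4 16 0 16 (CL 3 16 0 16 (CL 2 16 0 16 (CL 1 16 0 16 (CL 0 16 0 16 (CL 4 17 0 17 (CL 3 17 0 17 (CL 2 17 0 17 (CL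 1 17 0 17 (CL 0 17 0 17 (CL 4 18 0 18 (CL 3 18 0 18 (CL 2 18 0 18 (CL 1 18 0 18 (CL 0 18 0 18 (CL 4 19 0 19 (CL 3 19 0 19 (CL 2 19 0 19 (CL 1 19 0 19 (CL 0 19 0 19 (CL 4 20 0 20 (CL 3 20 0 20 (CL 2 20 0 20 (CL 1 20 0 20 (CL 0 20 0 20 (CL 4 21 0 21 (CL 3 21 0 21 (CL 2 21 0 21 (CL 1 21 0 21 (CL 0 21 0 21 (CL 4 25 0 25 (CL 3 25 0 25 (CL 2 25 0 25 (CL 1 25 0 25 (CL 0 25 0 25 (CX 0))))))))))))))))))))))))))))))))))))))))))))))))))))))))))))))))))))
(CB 3 7
(CL 3 14 2 3 (CL 3 13 2 3 (CL 3 12 2 3 (CL 3 11 2 3 (CL 3 10 2 3 (CL 4 10 2 10 (CL 2 10 2 10 (CL 1 10 2 10 (CL 0 10 2 10 (CL 4 11 2 11 (CL 2 11 2 11 (CL 1 11 2 11 (CL 0 11 2 11 (CL 0 25 1 0 (CL 0 21 1 0 (CL 0 20 1 0 (CL 0 19 1 0 (CL 0 18 1 0 (CL 0 17 1 0 (CL 0 16 1 0 (CL 0 15 1 0 (CL 1 25 1 1 (CL 1 21 1 1 (CL 1 20 1 1 (CL 1 19 1 1 (CL 1 18 1 1 (CL 1 17 1 1 (CL 1 16 1 1 (CL 1 15 1 1 (CL 2 25 1 2 (CL 2 21 1 2 (CL 2 20 1 2 (CL 2 19 1 2 (CL 2 18 1 2 (CL 2 17 1 2 (CL 2 16 1 2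 (CL 2 15 1 2 (CL 4 15 0 15 (CL 3 15 0 15 (CL 2 15 0 15 (CL 1 15 0 15 (CL 0 15 0 15 (CL 4 16 0 16 (CL 3 16 0 16 (CL 2 16 0 16 (CL 1 16 0 16 (CL 0 16 0 16 (CL 4 17 0 17 (CL 3 17 0 17 (CL 2 17 0 17 (CL 1 17 0 17 (CL 0 17 0 17 (CL 4 18 0 18 (CL 3 18 0 18 (CL 2 18 0 18 (CL 1 18 0 18 (CL 0 18 0 18 (CL 4 19 0 19 (CL 3 19 0 19 (CL 2 19 0 19 (CL 1 19 0 19 (CL 0 19 0 19 (CL 4 20 0 20 (CL 3 20 0 20 (CL 2 20 0 20 (CL 1 20 0 20 (CL 0 20 0 20 (CL 4 21 0 21 (CL 3 21 0 21 (CL 2 21 0 21 (CL 1 21 0 21 (CL 0 21 0 21 (CL 4 25 0 25 (CL 3 25 0 25 (CL 2 25 0 25 (CL 1 25 0 25 (CL 0 25 0 25 (CX 0))))))))))))))))))))))))))))))))))))))))))))))))))))))))))))))))))))))))))))))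
(CB 4 7
(CL 4 14 2 4 (CL 4 13 2 4 (CL 4 12 2 4 (CL 4 11 2 4 (CL 4 10 2 4 (CL 3 10 2 10 (CL 2 10 2 10 (CL 1 10 2 10 (CL 0 10 2 10 (CL 3 11 2 11 (CL 2 11 2 11 (CL 1 11 2 11 (CL 0 11 2 11 (CL 0 25 1 0 (CL 0 21 1 0 (CL 0 20 1 0 (CL 0 19 1 0 (CL 0 18 1 0 (CL 0 17 1 0 (CL 0 16 1 0 (CL 0 15 1 0 (CL 1 25 1 1 (CL 1 21 1 1 (CL 1 20 1 1 (CL 1 19 1 1 (CL 1 18 1 1 (CL 1 17 1 1 (CL 1 16 1 1 (CL 1 15 1 1 (CL 2 25 1 2 (CL 2 21 1 2 (CL 2 20 1 2 (CL 2 19 1 2 (CL 2 18 1 2 (CL 2 17 1 2 (CL 2 16 1 2 (CL 2 15 1 2 (CL 4 15 0 15 (CL 3 15 0 15 (CL 2 15 0 15 (CL 1 15 0 15 (CL 0 15 0 15 (CL 4 16 0 16 (CL 3 16 0 16 (CL 2 16 0 16 (CL 1 16 0 16 (CL 0 16 0 16 (CL 4 17 0 17 (CL 3 17 0 17 (CL 2 17 0 17 (CL 1 17 0 17 (CL 0 17 0 17 (CL 4 18 0 18 (CL 3 18 0 18 (CL 2 18 0 18 (CL 1 18 0 18 (CL 0 18 0 18 (CL 4 19 0 19 (CL 3 19 0 19 (CL 2 19 0 19 (CL 1 19 0 19 (CL 0 19 0 19 (CL 4 20 0 20 (CL 3 20 0 20 (CL 2 20 0 20 (CL 1 20 0 20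 (CL 0 20 0 20 (CL 4 21 0 21 (CL 3 21 0 21 (CL 2 21 0 21 (CL 1 21 0 21 (CL 0 21 0 21 (CL 4 25 0 25 (CL 3 25 0 25 (CL 2 25 0 25 (CL 1 25 0 25 (CL 0 25 0 25 (CX 0))))))))))))))))))))))))))))))))))))))))))))))))))))))))))))))))))))))))))))))
(CB 3 8
(CL 3 14 2 3 (CL 3 13 2 3 (CL 3 12 2 3 (CL 3 11 2 3 (CL 3 10 2 3 (CL 4 10 2 10 (CL 2 10 2 10 (CL 1 10 2 10 (CL 0 10 2 10 (CL 4 11 2 11 (CL 2 11 2 11 (CL 1 11 2 11 (CL 0 11 2 11 (CL 0 25 1 0 (CL 0 21 1 0 (CL 0 20 1 0 (CL 0 19 1 0 (CL 0 18 1 0 (CL 0 17 1 0 (CL 0 16 1 0 (CL 0 15 1 0 (CL 1 25 1 1 (CL 1 21 1 1 (CL 1 20 1 1 (CL 1 19 1 1 (CL 1 18 1 1 (CL 1 17 1 1 (CL 1 16 1 1 (CL 1 15 1 1 (CL 2 25 1 2 (CL 2 21 1 2 (CL 2 20 1 2 (CL 2 19 1 2 (CL 2 18 1 2 (CL 2 17 1 2 (CL 2 16 1 2 (CL 2 15 1 2 (CL 4 15 0 15 (CL 3 15 0 15 (CL 2 15 0 15 (CL 1 15 0 15 (CL 0 15 0 15 (CL 4 16 0 16 (CL 3 16 0 16 (CL 2 16 0 16 (CL 1 16 0 16 (CL 0 16 0 16 (CL 4 17 0 17 (CL 3 17 0 17 (CL 2 17 0 17 (CL 1 17 0 17 (CL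 0 17 0 17 (CL 4 18 0 18 (CL 3 18 0 18 (CL 2 18 0 18 (CL 1 18 0 18 (CL 0 18 0 18 (CL 4 19 0 19 (CL 3 19 0 19 (CL 2 19 0 19 (CL 1 19 0 19 (CL 0 19 0 19 (CL 4 20 0 20 (CL 3 20 0 20 (CL 2 20 0 20 (CL 1 20 0 20 (CL 0 20 0 20 (CL 4 21 0 21 (CL 3 21 0 21 (CL 2 21 0 21 (CL 1 21 0 21 (CL 0 21 0 21 (CL 4 25 0 25 (CL 3 25 0 25 (CL 2 25 0 25 (CL 1 25 0 25 (CL 0 25 0 25 (CX 0))))))))))))))))))))))))))))))))))))))))))))))))))))))))))))))))))))))))))))))
(CB 3 9
(CL 3 14 2 3 (CL 3 13 2 3 (CL 3 12 2 3 (CL 3 11 2 3 (CL 3 10 2 3 (CL 4 10 2 10 (CL 2 10 2 10 (CL 1 10 2 10 (CL 0 10 2 10 (CL 4 11 2 11 (CL 2 11 2 11 (CL 1 11 2 11 (CL 0 11 2 11 (CL 0 25 1 0 (CL 0 21 1 0 (CL 0 20 1 0 (CL 0 19 1 0 (CL 0 18 1 0 (CL 0 17 1 0 (CL 0 16 1 0 (CL 0 15 1 0 (CL 1 25 1 1 (CL 1 21 1 1 (CL 1 20 1 1 (CL 1 19 1 1 (CL 1 18 1 1 (CL 1 17 1 1 (CL 1 16 1 1 (CL 1 15 1 1 (CL 2 25 1 2 (CL 2 21 1 2 (CL 2 20 1 2 (CL 2 19 1 2 (CL 2 18 1 2 (CL 2 17 1 2 (CL 2 16 1 2 (CL 2 15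 1 2 (CL 4 15 0 15 (CL 3 15 0 15 (CL 2 15 0 15 (CL 1 15 0 15 (CL 0 15 0 15 (CL 4 16 0 16 (CL 3 16 0 16 (CL 2 16 0 16 (CL 1 16 0 16 (CL 0 16 0 16 (CL 4 17 0 17 (CL 3 17 0 17 (CL 2 17 0 17 (CL 1 17 0 17 (CL 0 17 0 17 (CL 4 18 0 18 (CL 3 18 0 18 (CL 2 18 0 18 (CL 1 18 0 18 (CL 0 18 0 18 (CL 4 19 0 19 (CL 3 19 0 19 (CL 2 19 0 19 (CL 1 19 0 19 (CL 0 19 0 19 (CL 4 20 0 20 (CL 3 20 0 20 (CL 2 20 0 20 (CL 1 20 0 20 (CL 0 20 0 20 (CL 4 21 0 21 (CL 3 21 0 21 (CL 2 21 0 21 (CL 1 21 0 21 (CL 0 21 0 21 (CL 4 25 0 25 (CL 3 25 0 25 (CL 2 25 0 25 (CL 1 25 0 25 (CL 0 25 0 25 (CX 0))))))))))))))))))))))))))))))))))))))))))))))))))))))))))))))))))))))))))))))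
(CB 4 8
(CL 4 14 2 4 (CL 4 13 2 4 (CL 4 12 2 4 (CL 4 11 2 4 (CL 4 10 2 4 (CL 3 10 2 10 (CL 2 10 2 10 (CL 1 10 2 10 (CL 0 10 2 10 (CL 3 11 2 11 (CL 2 11 2 11 (CL 1 11 2 11 (CL 0 11 2 11 (CL 0 25 1 0 (CL 0 21 1 0 (CL 0 20 1 0 (CL 0 19 1 0 (CL 0 18 1 0 (CL 0 17 1 0 (CL 0 16 1 0 (CL 0 15 1 0 (CL 1 25 1 1 (CL 1 21 1 1 (CL 1 20 1 1 (CL 1 19 1 1 (CL 1 18 1 1 (CL 1 17 1 1 (CL 1 16 1 1 (CL 1 15 1 1 (CL 2 25 1 2 (CL 2 21 1 2 (CL 2 20 1 2 (CL 2 19 1 2 (CL 2 18 1 2 (CL 2 17 1 2 (CL 2 16 1 2 (CL 2 15 1 2 (CL 3 25 1 3 (CL 3 21 1 3 (CL 3 20 1 3 (CL 3 19 1 3 (CL 3 18 1 3 (CL 3 17 1 3 (CL 3 16 1 3 (CL 3 15 1 3 (CL 3 15 0 15 (CL 2 15 0 15 (CL 1 15 0 15 (CL 0 15 0 15 (CL 3 16 0 16 (CL 2 16 0 16 (CL 1 16 0 16 (CL 0 16 0 16 (CL 3 17 0 17 (CL 2 17 0 17 (CL 1 17 0 17 (CL 0 17 0 17 (CL 3 18 0 18 (CL 2 18 0 18 (CL 1 18 0 18 (CL 0 18 0 18 (CL 3 19 0 19 (CL 2 19 0 19 (CL 1 19 0 19 (CL 0 19 0 19 (CL 3 20 0 20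 (CL 2 20 0 20 (CL 1 20 0 20 (CL 0 20 0 20 (CL 3 21 0 21 (CL 2 21 0 21 (CL 1 21 0 21 (CL 0 21 0 21 (CL 3 25 0 25 (CL 2 25 0 25 (CL 1 25 0 25 (CL 0 25 0 25 (CX 0))))))))))))))))))))))))))))))))))))))))))))))))))))))))))))))))))))))))))))))
(CB 4 9
(CL 4 14 2 4 (CL 4 13 2 4 (CL 4 12 2 4 (CL 4 11 2 4 (CL 4 10 2 4 (CL 3 10 2 10 (CL 2 10 2 10 (CL 1 10 2 10 (CL 0 10 2 10 (CL 3 11 2 11 (CL 2 11 2 11 (CL 1 11 2 11 (CL 0 11 2 11 (CL 0 25 1 0 (CL 0 21 1 0 (CL 0 20 1 0 (CL 0 19 1 0 (CL 0 18 1 0 (CL 0 17 1 0 (CL 0 16 1 0 (CL 0 15 1 0 (CL 1 25 1 1 (CL 1 21 1 1 (CL 1 20 1 1 (CL 1 19 1 1 (CL 1 18 1 1 (CL 1 17 1 1 (CL 1 16 1 1 (CL 1 15 1 1 (CL 2 25 1 2 (CL 2 21 1 2 (CL 2 20 1 2 (CL 2 19 1 2 (CL 2 18 1 2 (CL 2 17 1 2 (CL 2 16 1 2 (CL 2 15 1 2 (CL 3 25 1 3 (CL 3 21 1 3 (CL 3 20 1 3 (CL 3 19 1 3 (CL 3 18 1 3 (CL 3 17 1 3 (CL 3 16 1 3 (CL 3 15 1 3 (CL 3 15 0 15 (CL 2 15 0 15 (CL 1 15 0 15 (CL 0 15 0 15 (CL 3 16 0 16 (CL 2 16 0 16 (CL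 1 16 0 16 (CL 0 16 0 16 (CL 3 17 0 17 (CL 2 17 0 17 (CL 1 17 0 17 (CL 0 17 0 17 (CL 3 18 0 18 (CL 2 18 0 18 (CL 1 18 0 18 (CL 0 18 0 18 (CL 3 19 0 19 (CL 2 19 0 19 (CL 1 19 0 19 (CL 0 19 0 19 (CL 3 20 0 20 (CL 2 20 0 20 (CL 1 20 0 20 (CL 0 20 0 20 (CL 3 21 0 21 (CL 2 21 0 21 (CL 1 21 0 21 (CL 0 21 0 21 (CL 3 25 0 25 (CL 2 25 0 25 (CL 1 25 0 25 (CL 0 25 0 25 (CX 0))))))))))))))))))))))))))))))))))))))))))))))))))))))))))))))))))))))))))))))
(CB 0 10
(CT 0 14 10 0 (CT 0 11 10 0 (CT 4 10 0 0 (CT 1 10 0 0 (CL 0 29 1 0 (CL 0 28 1 0 (CL 0 27 1 0 (CL 0 26 1 0 (CL 0 25 1 0 (CL 0 24 1 0 (CL 0 23 1 0 (CL 0 22 1 0 (CL 0 21 1 0 (CL 0 20 1 0 (CL 0 19 1 0 (CL 0 18 1 0 (CL 0 17 1 0 (CL 0 16 1 0 (CL 0 15 1 0 (CL 0 14 2 0 (CT 9 14 0 1 (CT 8 14 0 1 (CT 7 14 0 1 (CT 6 14 0 1 (CT 5 14 0 1 (CL 0 11 2 0 (CT 9 11 0 1 (CT 8 11 0 1 (CT 7 11 0 1 (CT 6 11 0 1 (CT 5 11 0 1 (CL 5 13 0 5 (CL 5 12 0 5 (CL 5 10 0 5 (CL 6 13 0 6 (CL 6 12 0 6 (CL 6 10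 0 6 (CL 7 13 0 7 (CL 7 12 0 7 (CL 7 10 0 7 (CL 8 13 0 8 (CL 8 12 0 8 (CL 8 10 0 8 (CL 9 13 0 9 (CL 9 12 0 9 (CL 9 10 0 9 (CL 10 29 1 10 (CL 10 28 1 10 (CL 10 27 1 10 (CL 10 26 1 10 (CL 10 25 1 10 (CL 10 24 1 10 (CL 10 23 1 10 (CL 10 22 1 10 (CL 10 21 1 10 (CL 10 20 1 10 (CL 10 19 1 10 (CL 10 18 1 10 (CL 10 17 1 10 (CL 10 16 1 10 (CL 10 15 1 10 (CL 9 10 2 10 (CT 4 10 9 1 (CT 1 10 9 1 (CL 4 10 2 10 (CE 4 10))))))))))))))))))))))))))))))))))))))))))))))))))))))))))))))))))
(CT 9 10 0 1 (CT 8 10 0 1 (CT 7 10 0 1 (CT 6 10 0 1 (CT 5 10 0 1 (CL 0 26 1 0 (CL 0 25 1 0 (CL 0 21 1 0 (CL 0 20 1 0 (CL 0 16 1 0 (CL 0 15 1 0 (CL 9 10 0 10 (CL 8 10 0 10 (CL 7 10 0 10 (CL 6 10 0 10 (CL 5 10 0 10 (CL 1 10 0 10 (CL 1 10 2 10 (CL 1 15 0 15 (CL 1 16 0 16 (CL 1 20 0 20 (CL 1 21 0 21 (CL 1 25 0 25 (CL 1 26 0 26 (CX 1)))))))))))))))))))))))))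
(CL 0 11 0 0 (CL 0 11 1 0 (CL 9 10 0 10 (CL 9 10 2 10 (CL 8 10 0 10 (CL 8 10 2 10 (CL 7 10 0 10 (CL 7 10 2 10 (CL 6 10 0 10 (CL 6 10 2 10 (CL 5 10 0 10 (CL 5 10 2 10 (CL 9 11 0 11 (CL 9 11 2 11 (CL 8 11 0 11 (CL 8 11 2 11 (CL 7 11 0 11 (CL 7 11 2 11 (CL 6 11 0 11 (CL 6 11 2 11 (CL 5 11 0 11 (CL 5 11 2 11 (CL 5 25 1 5 (CL 5 21 1 5 (CL 5 20 1 5 (CL 5 19 1 5 (CL 5 18 1 5 (CL 5 17 1 5 (CL 5 16 1 5 (CL 5 15 1 5 (CL 6 25 1 6 (CL 6 21 1 6 (CL 6 20 1 6 (CL 6 19 1 6 (CL 6 18 1 6 (CL 6 17 1 6 (CL 6 16 1 6 (CL 6 15 1 6 (CL 7 25 1 7 (CL 7 21 1 7 (CL 7 20 1 7 (CL 7 19 1 7 (CL 7 18 1 7 (CL 7 17 1 7 (CL 7 16 1 7 (CL 7 15 1 7 (CL 8 25 1 8 (CL 8 21 1 8 (CL 8 20 1 8 (CL 8 19 1 8 (CL 8 18 1 8 (CL 8 17 1 8 (CL 8 16 1 8 (CL 8 15 1 8 (CL 9 25 1 9 (CL 9 21 1 9 (CL 9 20 1 9 (CL 9 19 1 9 (CL 9 18 1 9 (CL 9 17 1 9 (CL 9 16 1 9 (CL 9 15 1 9 (CL 9 15 0 15 (CL 8 15 0 15 (CL 7 15 0 15 (CL 6 15 0 15 (CL 5 15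 0 15 (CL 9 16 0 16 (CL 8 16 0 16 (CL 7 16 0 16 (CL 6 16 0 16 (CL 5 16 0 16 (CL 9 17 0 17 (CL 8 17 0 17 (CL 7 17 0 17 (CL 6 17 0 17 (CL 5 17 0 17 (CL 9 18 0 18 (CL 8 18 0 18 (CL 7 18 0 18 (CL 6 18 0 18 (CL 5 18 0 18 (CL 9 19 0 19 (CL 8 19 0 19 (CL 7 19 0 19 (CL 6 19 0 19 (CL 5 19 0 19 (CL 9 20 0 20 (CL 8 20 0 20 (CL 7 20 0 20 (CL 6 20 0 20 (CL 5 20 0 20 (CL 9 21 0 21 (CL 8 21 0 21 (CL 7 21 0 21 (CL 6 21 0 21 (CL 5 21 0 21 (CL 9 25 0 25 (CL 8 25 0 25 (CL 7 25 0 25 (CL 6 25 0 25 (CL 5 25 0 25 (CX 5))))))))))))))))))))))))))))))))))))))))))))))))))))))))))))))))))))))))))))))))))))))))))))))))))))))))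
(CE 0 0))
(CE 0 0))
(CE 0 0))
(CE 0 0))
(CE 0 0))
(CE 0 0))
(CE 0 0))
(CE 0 0))
(CE 0 0))
(CE 0 0))
(CE 0 0))
(CE 0 0))
(CE 0 0))
(CE 0 0))
(CE 0 0))
(CE 0 0))
(CE 0 0))
(CE 0 0))
(CE 0 0))
(CE 0 0))
(CE 0 0))
(CE 0 0))
(CE 0 0))
(CE 0 0))))))))))))))))))))))))))
(CL 0 14 0 0 (CL 0 14 2 0 (CL 0 13 0 0 (CL 0 13 2 0 (CL 0 12 0 0 (CL 0 12 2 0 (CL 0 11 0 0 (CL 0 11 2 0 (CL 0 10 0 0 (CL 0 10 2 0 (CL 0 9 0 0 (CL 0 9 1 0 (CL 0 8 0 0 (CL 0 8 1 0 (CL 0 7 0 0 (CL 0 7 1 0 (CL 0 6 0 0 (CL 0 6 1 0 (CL 5 14 0 5 (CL 5 14 2 5 (CL 5 13 0 5 (CL 5 13 2 5 (CL 5 12 0 5 (CL 5 12 2 5 (CL 5 11 0 5 (CL 5 11 2 5 (CL 5 10 0 5 (CL 5 10 2 5 (CL 6 14 0 6 (CL 6 14 2 6 (CL 6 13 0 6 (CL 6 13 2 6 (CL 6 12 0 6 (CL 6 12 2 6 (CL 6 11 0 6 (CL 6 11 2 6 (CL 6 10 0 6 (CL 6 10 2 6 (CL 7 14 0 7 (CL 7 14 2 7 (CL 7 13 0 7 (CL 7 13 2 7 (CL 7 12 0 7 (CL 7 12 2 7 (CL 7 11 0 7 (CL 7 11 2 7 (CL 7 10 0 7 (CL 7 10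 2 7 (CL 8 14 0 8 (CL 8 14 2 8 (CL 8 13 0 8 (CL 8 13 2 8 (CL 8 12 0 8 (CL 8 12 2 8 (CL 8 11 0 8 (CL 8 11 2 8 (CL 8 10 0 8 (CL 8 10 2 8 (CL 9 14 0 9 (CL 9 14 2 9 (CL 9 13 0 9 (CL 9 13 2 9 (CL 9 12 0 9 (CL 9 12 2 9 (CL 9 11 0 9 (CL 9 11 2 9 (CL 9 10 0 9 (CL 9 10 2 9 (CL 10 25 1 10 (CL 10 21 1 10 (CL 10 20 1 10 (CL 10 19 1 10 (CL 10 18 1 10 (CL 10 17 1 10 (CL 10 16 1 10 (CL 10 15 1 10 (CL 11 25 1 11 (CL 11 21 1 11 (CL 11 20 1 11 (CL 11 19 1 11 (CL 11 18 1 11 (CL 11 17 1 11 (CL 11 16 1 11 (CL 11 15 1 11 (CL 12 25 1 12 (CL 12 21 1 12 (CL 12 20 1 12 (CL 12 19 1 12 (CL 12 18 1 12 (CL 12 17 1 12 (CL 12 16 1 12 (CL 12 15 1 12 (CL 13 25 1 13 (CL 13 21 1 13 (CL 13 20 1 13 (CL 13 19 1 13 (CL 13 18 1 13 (CL 13 17 1 13 (CL 13 16 1 13 (CL 13 15 1 13 (CL 14 25 1 14 (CL 14 21 1 14 (CL 14 20 1 14 (CL 14 19 1 14 (CL 14 18 1 14 (CL 14 17 1 14 (CL 14 16 1 14 (CL 14 15 1 14 (CL 14 15 0 15 (CL 13 15 0 15 (CL 12 15 0 15 (CL 11 15 0 15 (CL 10 15 0 15 (CL 14 16 0 16 (CL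 13 16 0 16 (CL 12 16 0 16 (CL 11 16 0 16 (CL 10 16 0 16 (CL 14 17 0 17 (CL 13 17 0 17 (CL 12 17 0 17 (CL 11 17 0 17 (CL 10 17 0 17 (CL 14 18 0 18 (CL 13 18 0 18 (CL 12 18 0 18 (CL 11 18 0 18 (CL 10 18 0 18 (CL 14 19 0 19 (CL 13 19 0 19 (CL 12 19 0 19 (CL 11 19 0 19 (CL 10 19 0 19 (CL 14 20 0 20 (CL 13 20 0 20 (CL 12 20 0 20 (CL 11 20 0 20 (CL 10 20 0 20 (CL 14 21 0 21 (CL 13 21 0 21 (CL 12 21 0 21 (CL 11 21 0 21 (CL 10 21 0 21 (CL 14 25 0 25 (CL 13 25 0 25 (CL 12 25 0 25 (CL 11 25 0 25 (CL 10 25 0 25 (CX 10)))))))))))))))))))))))))))))))))))))))))))))))))))))))))))))))))))))))))))))))))))))))))))))))))))))))))))))))))))))))))))))))))))))))))))))))))))))).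
Definition cert_000112 : cert :=
(CL 15 29 2 15 (CL 15 28 2 15 (CL 15 27 2 15 (CL 15 26 2 15 (CL 15 25 2 15 (CL 16 29 2 16 (CL 16 28 2 16 (CL 16 27 2 16 (CL 16 26 2 16 (CL 16 25 2 16 (CL 17 29 2 17 (CL 17 28 2 17 (CL 17 27 2 17 (CL 17 26 2 17 (CL 17 25 2 17 (CL 18 29 2 18 (CL 18 28 2 18 (CL 18 27 2 18 (CL 18 26 2 18 (CL 18 25 2 18 (CL 19 29 2 19 (CL 19 28 2 19 (CL 19 27 2 19 (CL 19 26 2 19 (CL 19 25 2 19 (CL 20 29 2 20 (CL 20 28 2 20 (CL 20 27 2 20 (CL 20 26 2 20 (CL 20 25 2 20 (CL 21 29 2 21 (CL 21 28 2 21 (CL 21 27 2 21 (CL 21 26 2 21 (CL 21 25 2 21 (CL 22 29 2 22 (CL 22 28 2 22 (CL 22 27 2 22 (CL 22 26 2 22 (CL 22 25 2 22 (CL 23 29 2 23 (CL 23 28 2 23 (CL 23 27 2 23 (CL 23 26 2 23 (CL 23 25 2 23 (CL 24 29 2 24 (CL 24 28 2 24 (CL 24 27 2 24 (CL 24 26 2 24 (CL 24 25 2 24 (CL 24 25 1 25 (CL 23 25 1 25 (CL 22 25 1 25 (CL 21 25 1 25 (CL 20 25 1 25 (CL 19 25 1 25 (CL 18 25 1 25 (CL 17 25 1 25 (CL 16 25 1 25 (CL 15 25 1 25 (CL 10 25 0 25 (CL 6 25 0 25 (CL 5 25 0 25 (CL 4 25 0 25 (CL 3 25 0 25 (CL 2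 25 0 25 (CL 1 25 0 25 (CL 0 25 0 25 (CL 24 26 1 26 (CL 23 26 1 26 (CL 22 26 1 26 (CL 21 26 1 26 (CL 20 26 1 26 (CL 19 26 1 26 (CL 18 26 1 26 (CL 17 26 1 26 (CL 16 26 1 26 (CL 15 26 1 26 (CL 10 26 0 26 (CL 6 26 0 26 (CL 5 26 0 26 (CL 4 26 0 26 (CL 3 26 0 26 (CL 2 26 0 26 (CL 1 26 0 26 (CL 0 26 0 26 (CL 24 27 1 27 (CL 23 27 1 27 (CL 22 27 1 27 (CL 21 27 1 27 (CL 20 27 1 27 (CL 19 27 1 27 (CL 18 27 1 27 (CL 17 27 1 27 (CL 16 27 1 27 (CL 15 27 1 27 (CL 10 27 0 27 (CL 6 27 0 27 (CL 5 27 0 27 (CL 4 27 0 27 (CL 3 27 0 27 (CL 2 27 0 27 (CL 1 27 0 27 (CL 0 27 0 27 (CL 24 28 1 28 (CL 23 28 1 28 (CL 22 28 1 28 (CL 21 28 1 28 (CL 20 28 1 28 (CL 19 28 1 28 (CL 18 28 1 28 (CL 17 28 1 28 (CL 16 28 1 28 (CL 15 28 1 28 (CL 10 28 0 28 (CL 6 28 0 28 (CL 5 28 0 28 (CL 4 28 0 28 (CL 3 28 0 28 (CL 2 28 0 28 (CL 1 28 0 28 (CL 0 28 0 28 (CL 24 29 1 29 (CL 23 29 1 29 (CL 22 29 1 29 (CL 21 29 1 29 (CL 20 29 1 29 (CL 19 29 1 29 (CL 18 29 1 29 (CL 17 29 1 29 (CL 16 29 1 29 (CL 15 29 1 29 (CL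 10 29 0 29 (CL 6 29 0 29 (CL 5 29 0 29 (CL 4 29 0 29 (CL 3 29 0 29 (CL 2 29 0 29 (CL 1 29 0 29 (CL 0 29 0 29 (CL 0 29 2 0 (CL 0 28 2 0 (CL 0 27 2 0 (CL 0 26 2 0 (CL 0 25 2 0 (CL 1 29 2 1 (CL 1 28 2 1 (CL 1 27 2 1 (CL 1 26 2 1 (CL 1 25 2 1 (CL 2 29 2 2 (CL 2 28 2 2 (CL 2 27 2 2 (CL 2 26 2 2 (CL 2 25 2 2 (CL 3 29 2 3 (CL 3 28 2 3 (CL 3 27 2 3 (CL 3 26 2 3 (CL 3 25 2 3 (CL 4 29 2 4 (CL 4 28 2 4 (CL 4 27 2 4 (CL 4 26 2 4 (CL 4 25 2 4 (CL 5 29 2 5 (CL 5 28 2 5 (CL 5 27 2 5 (CL 5 26 2 5 (CL 5 25 2 5 (CL 6 29 2 6 (CL 6 28 2 6 (CL 6 27 2 6 (CL 6 26 2 6 (CL 6 25 2 6 (CL 10 29 2 10 (CL 10 28 2 10 (CL 10 27 2 10 (CL 10 26 2 10 (CL 10 25 2 10 (CX 25))))))))))))))))))))))))))))))))))))))))))))))))))))))))))))))))))))))))))))))))))))))))))))))))))))))))))))))))))))))))))))))))))))))))))))))))))))))))))))))))))))))))))))))))))))).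
Definition cert_001122 : cert :=
(CB 0 5
(CT 1 5 0 0 (CL 0 29 2 0 (CL 0 28 2 0 (CL 0 27 2 0 (CL 0 26 2 0 (CL 0 25 2 0 (CL 0 24 2 0 (CL 0 23 2 0 (CL 0 22 2 0 (CL 0 21 2 0 (CL 0 20 2 0 (CL 0 19 1 0 (CL 0 18 1 0 (CL 0 17 1 0 (CL 0 16 1 0 (CL 0 15 1 0 (CL 0 14 1 0 (CL 0 13 1 0 (CL 0 12 1 0 (CL 0 11 1 0 (CL 0 10 1 0 (CL 1 10 0 10 (CL 1 11 0 11 (CL 1 12 0 12 (CL 1 13 0 13 (CL 1 14 0 14 (CL 1 15 0 15 (CL 1 16 0 16 (CL 1 17 0 17 (CL 1 18 0 18 (CL 1 19 0 19 (CL 1 20 0 20 (CL 1 21 0 21 (CL 1 22 0 22 (CL 1 23 0 23 (CL 1 24 0 24 (CL 1 25 0 25 (CL 1 26 0 26 (CX 1)))))))))))))))))))))))))))))))))))))))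
(CL 0 19 1 0 (CL 0 18 1 0 (CL 0 17 1 0 (CL 0 16 1 0 (CL 0 15 1 0 (CL 0 14 1 0 (CL 0 13 1 0 (CL 0 12 1 0 (CL 0 11 1 0 (CL 0 10 1 0 (CL 0 9 2 0 (CL 0 8 2 0 (CL 0 7 2 0 (CL 0 6 2 0 (CL 5 19 1 5 (CL 5 18 1 5 (CL 5 17 1 5 (CL 5 16 1 5 (CL 5 15 1 5 (CL 5 14 1 5 (CL 5 13 1 5 (CL 5 12 1 5 (CL 5 11 1 5 (CL 5 10 1 5 (CL 4 5 2 5 (CL 3 5 2 5 (CL 2 5 2 5 (CL 1 5 2 5 (CL 6 19 1 6 (CL 6 18 1 6 (CL 6 17 1 6 (CL 6 16 1 6 (CL 6 15 1 6 (CL 6 14 1 6 (CL 6 13 1 6 (CL 6 12 1 6 (CL 6 11 1 6 (CL 6 10 1 6 (CL 7 19 1 7 (CL 7 18 1 7 (CL 7 17 1 7 (CL 7 16 1 7 (CL 7 15 1 7 (CL 7 14 1 7 (CL 7 13 1 7 (CL 7 12 1 7 (CL 7 11 1 7 (CL 7 10 1 7 (CL 8 19 1 8 (CL 8 18 1 8 (CL 8 17 1 8 (CL 8 16 1 8 (CL 8 15 1 8 (CL 8 14 1 8 (CL 8 13 1 8 (CL 8 12 1 8 (CL 8 11 1 8 (CL 8 10 1 8 (CL 9 19 1 9 (CL 9 18 1 9 (CL 9 17 1 9 (CL 9 16 1 9 (CL 9 15 1 9 (CL 9 14 1 9 (CL 9 13 1 9 (CL 9 12 1 9 (CL 9 11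 1 9 (CL 9 10 1 9 (CL 9 10 0 10 (CL 8 10 0 10 (CL 7 10 0 10 (CL 6 10 0 10 (CL 5 10 0 10 (CL 4 10 0 10 (CL 1 10 0 10 (CL 9 11 0 11 (CL 8 11 0 11 (CL 7 11 0 11 (CL 6 11 0 11 (CL 5 11 0 11 (CL 4 11 0 11 (CL 1 11 0 11 (CL 9 12 0 12 (CL 8 12 0 12 (CL 7 12 0 12 (CL 6 12 0 12 (CL 5 12 0 12 (CL 4 12 0 12 (CL 1 12 0 12 (CL 9 13 0 13 (CL 8 13 0 13 (CL 7 13 0 13 (CL 6 13 0 13 (CL 5 13 0 13 (CL 4 13 0 13 (CL 1 13 0 13 (CL 9 14 0 14 (CL 8 14 0 14 (CL 7 14 0 14 (CL 6 14 0 14 (CL 5 14 0 14 (CL 4 14 0 14 (CL 1 14 0 14 (CL 9 15 0 15 (CL 8 15 0 15 (CL 7 15 0 15 (CL 6 15 0 15 (CL 5 15 0 15 (CL 4 15 0 15 (CL 1 15 0 15 (CL 9 16 0 16 (CL 8 16 0 16 (CL 7 16 0 16 (CL 6 16 0 16 (CL 5 16 0 16 (CL 4 16 0 16 (CL 1 16 0 16 (CL 9 17 0 17 (CL 8 17 0 17 (CL 7 17 0 17 (CL 6 17 0 17 (CL 5 17 0 17 (CL 4 17 0 17 (CL 1 17 0 17 (CL 9 18 0 18 (CL 8 18 0 18 (CL 7 18 0 18 (CL 6 18 0 18 (CL 5 18 0 18 (CL 4 18 0 18 (CL 1 18 0 18 (CL 9 19 0 19 (CL 8 19 0 19 (CL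 7 19 0 19 (CL 6 19 0 19 (CL 5 19 0 19 (CL 4 19 0 19 (CL 1 19 0 19 (CL 1 29 2 1 (CL 1 28 2 1 (CL 1 27 2 1 (CL 1 26 2 1 (CL 1 25 2 1 (CL 1 24 2 1 (CL 1 23 2 1 (CL 1 22 2 1 (CL 1 21 2 1 (CL 1 20 2 1 (CL 1 19 1 1 (CT 1 9 19 2 (CT 1 8 19 2 (CT 1 7 19 2 (CT 1 6 19 2 (CL 1 18 1 1 (CL 1 17 1 1 (CL 1 16 1 1 (CL 1 15 1 1 (CL 1 14 1 1 (CL 1 13 1 1 (CL 1 12 1 1 (CL 1 11 1 1 (CL 1 10 1 1 (CL 2 19 1 2 (CL 2 18 1 2 (CL 2 17 1 2 (CL 2 16 1 2 (CL 2 15 1 2 (CL 2 14 1 2 (CL 2 13 1 2 (CL 2 12 1 2 (CL 2 11 1 2 (CL 2 10 1 2 (CL 3 19 1 3 (CL 3 18 1 3 (CL 3 17 1 3 (CL 3 16 1 3 (CL 3 15 1 3 (CL 3 14 1 3 (CL 3 13 1 3 (CL 3 12 1 3 (CL 3 11 1 3 (CL 3 10 1 3 (CL 4 29 2 4 (CL 4 28 2 4 (CL 4 27 2 4 (CL 4 26 2 4 (CL 4 25 2 4 (CL 4 24 2 4 (CL 4 23 2 4 (CL 4 22 2 4 (CL 4 21 2 4 (CL 4 20 2 4 (CL 4 19 1 4 (CT 4 9 19 2 (CT 4 8 19 2 (CT 4 7 19 2 (CT 4 6 19 2 (CL 4 18 1 4 (CL 4 17 1 4 (CL 4 16 1 4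 (CL 4 15 1 4 (CL 4 14 1 4 (CL 4 13 1 4 (CL 4 12 1 4 (CL 4 11 1 4 (CL 4 10 1 4 (CL 5 20 2 5 (CL 6 20 2 6 (CL 7 20 2 7 (CL 8 20 2 8 (CL 9 20 2 9 (CL 10 20 2 10 (CL 11 20 2 11 (CL 12 20 2 12 (CL 13 20 2 13 (CL 14 20 2 14 (CL 15 20 2 15 (CL 16 20 2 16 (CL 17 20 2 17 (CL 18 20 2 18 (CL 19 20 2 19 (CX 20))))))))))))))))))))))))))))))))))))))))))))))))))))))))))))))))))))))))))))))))))))))))))))))))))))))))))))))))))))))))))))))))))))))))))))))))))))))))))))))))))))))))))))))))))))))))))))))))))))))))))))))))))))))))))))))
(CL 0 29 2 0 (CL 0 28 2 0 (CL 0 27 2 0 (CL 0 26 2 0 (CL 0 25 2 0 (CL 0 24 2 0 (CL 0 23 2 0 (CL 0 22 2 0 (CL 0 21 2 0 (CL 0 20 2 0 (CL 0 9 1 0 (CL 0 8 1 0 (CL 0 7 1 0 (CL 0 6 1 0 (CL 5 29 2 5 (CL 5 28 2 5 (CL 5 27 2 5 (CL 5 26 2 5 (CL 5 25 2 5 (CL 5 24 2 5 (CL 5 23 2 5 (CL 5 22 2 5 (CL 5 21 2 5 (CL 5 20 2 5 (CL 6 29 2 6 (CL 6 28 2 6 (CL 6 27 2 6 (CL 6 26 2 6 (CL 6 25 2 6 (CL 6 24 2 6 (CL 6 23 2 6 (CL 6 22 2 6 (CL 6 21 2 6 (CL 6 20 2 6 (CL 7 29 2 7 (CL 7 28 2 7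 (CL 7 27 2 7 (CL 7 26 2 7 (CL 7 25 2 7 (CL 7 24 2 7 (CL 7 23 2 7 (CL 7 22 2 7 (CL 7 21 2 7 (CL 7 20 2 7 (CL 8 29 2 8 (CL 8 28 2 8 (CL 8 27 2 8 (CL 8 26 2 8 (CL 8 25 2 8 (CL 8 24 2 8 (CL 8 23 2 8 (CL 8 22 2 8 (CL 8 21 2 8 (CL 8 20 2 8 (CL 9 29 2 9 (CL 9 28 2 9 (CL 9 27 2 9 (CL 9 26 2 9 (CL 9 25 2 9 (CL 9 24 2 9 (CL 9 23 2 9 (CL 9 22 2 9 (CL 9 21 2 9 (CL 9 20 2 9 (CL 9 20 0 20 (CL 8 20 0 20 (CL 7 20 0 20 (CL 6 20 0 20 (CL 5 20 0 20 (CL 4 20 0 20 (CL 1 20 0 20 (CL 9 21 0 21 (CL 8 21 0 21 (CL 7 21 0 21 (CL 6 21 0 21 (CL 5 21 0 21 (CL 4 21 0 21 (CL 1 21 0 21 (CL 9 22 0 22 (CL 8 22 0 22 (CL 7 22 0 22 (CL 6 22 0 22 (CL 5 22 0 22 (CL 4 22 0 22 (CL 1 22 0 22 (CL 9 23 0 23 (CL 8 23 0 23 (CL 7 23 0 23 (CL 6 23 0 23 (CL 5 23 0 23 (CL 4 23 0 23 (CL 1 23 0 23 (CL 9 24 0 24 (CL 8 24 0 24 (CL 7 24 0 24 (CL 6 24 0 24 (CL 5 24 0 24 (CL 4 24 0 24 (CL 1 24 0 24 (CL 9 25 0 25 (CL 8 25 0 25 (CL 7 25 0 25 (CL 6 25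 0 25 (CL 5 25 0 25 (CL 4 25 0 25 (CL 1 25 0 25 (CL 9 26 0 26 (CL 8 26 0 26 (CL 7 26 0 26 (CL 6 26 0 26 (CL 5 26 0 26 (CL 4 26 0 26 (CL 1 26 0 26 (CL 4 27 0 27 (CL 1 27 0 27 (CL 4 28 0 28 (CL 1 28 0 28 (CL 9 29 0 29 (CL 8 29 0 29 (CL 4 29 0 29 (CL 1 29 0 29 (CL 1 29 2 1 (CL 1 28 2 1 (CL 1 27 2 1 (CL 1 26 2 1 (CL 1 25 2 1 (CL 1 24 2 1 (CL 1 23 2 1 (CL 1 22 2 1 (CL 1 21 2 1 (CL 1 20 2 1 (CL 1 11 1 1 (CL 1 10 1 1 (CL 4 29 2 4 (CT 4 9 29 1 (CT 4 8 29 1 (CL 4 28 2 4 (CL 4 27 2 4 (CL 4 26 2 4 (CL 4 25 2 4 (CL 4 24 2 4 (CL 4 23 2 4 (CL 4 22 2 4 (CL 4 21 2 4 (CL 4 20 2 4 (CL 4 11 1 4 (CL 4 10 1 4 (CL 5 11 1 5 (CL 5 10 1 5 (CL 6 11 1 6 (CL 6 10 1 6 (CL 7 11 1 7 (CL 7 10 1 7 (CL 8 11 1 8 (CL 8 10 1 8 (CL 9 11 1 9 (CL 9 10 1 9 (CL 9 10 0 10 (CL 8 10 0 10 (CL 7 10 0 10 (CL 6 10 0 10 (CL 5 10 0 10 (CT 0 10 5 2 (CL 3 10 0 10 (CL 2 10 0 10 (CL 0 10 0 10 (CT 0 11 10 1 (CL 11 29 2 11 (CL 11 28 2 11 (CL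 11 27 2 11 (CL 11 26 2 11 (CL 11 25 2 11 (CL 11 24 2 11 (CL 11 23 2 11 (CL 11 22 2 11 (CL 11 21 2 11 (CL 11 20 2 11 (CL 11 19 2 11 (CL 11 18 2 11 (CL 11 17 2 11 (CL 11 16 2 11 (CL 11 15 2 11 (CL 9 11 0 11 (CL 8 11 0 11 (CL 7 11 0 11 (CL 6 11 0 11 (CL 5 11 0 11 (CT 0 11 5 2 (CT 4 11 0 0 (CT 4 9 11 2 (CT 4 8 9 0 (CT 4 11 8 2 (CE 4 11)))))))))))))))))))))))))))))))))))))))))))))))))))))))))))))))))))))))))))))))))))))))))))))))))))))))))))))))))))))))))))))))))))))))))))))))))))))))))))))))))))))))))))))))))))))))))))))))))).

Definition refutation pat :=
  nth (CX 0) [:: cert_000000; cert_000001; cert_000011; cert_000012; cert_000111; cert_000112; cert_001122]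
    (index pat patterns).

Lemma refutationP : all (fun pat => check_cert (copy_domains pat) (refutation pat)) patterns.
Proof. by vm_compute. Qed.

Lemma no_triangle_free_coloring (col : nat -> nat -> nat) :
  (forall x y, col x y = col y x) -> (forall x y, col x y < 3) -> no_mono_triangle col -> False.
Proof.
move=> hsym hlt hnm.
have /(allP normalizesP) /and3P [hs hp hpat] : copy_pattern col \in words3 6.
  by apply: mem_words3; [rewrite size_map size_iota | apply/allP => c /mapP [k _ ->]].
set p := sort_colors _ in hs hp hpat; set s := sort_copies _ _ in hs hpat.
have hsym' := permuted_coloring_sym s p hsym.
have hlt' := @permuted_coloring_lt col s p hlt hp.
have hnm' := permuted_coloring_no_mono hlt hnm hs hp.
have := sound_copy_domains hsym' hlt' hnm'; rewrite copy_pattern_permuted //.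
exact: (@check_cert_sound _ hsym' hlt' hnm' _ _ (allP refutationP _ hpat)).
Qed.

Definition H6_vertex := ('I_5 + ('I_5 + ('I_5 + ('I_5 + ('I_5 + 'I_5)))))%type.

Definition vertex_of (x : nat) : H6_vertex :=
  let p := Ordinal (pos_of_lt x) in
  match copy_of x with
  | 0 => inl p
  | 1 => inr (inl p)
  | 2 => inr (inr (inl p))
  | 3 => inr (inr (inr (inl p)))
  | 4 => inr (inr (inr (inr (inl p))))
  | _ => inr (inr (inr (inr (inr p))))
  end.

Lemma vertex_of_adj_all :
  all (fun x => all (fun y => H6C5 (vertex_of x) (vertex_of y) == adj x y) (iota 0 30)) (iota 0 30).
Proof. by vm_compute. Qed.

Lemma vertex_of_inj_all :
  all (fun x => all (fun y => (vertex_of x == vertex_of y) ==> (x == y)) (iota 0 30)) (iota 0 30).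
Proof. by vm_compute. Qed.

Lemma H6C5_vertex_of x y : x < 30 -> y < 30 -> H6C5 (vertex_of x) (vertex_of y) = adj x y.
Proof.
move=> hx hy; move/allP: vertex_of_adj_all => /(_ x); rewrite mem_iota add0n hx => /(_ isT).
by move/allP => /(_ y); rewrite mem_iota add0n hy => /(_ isT) /eqP.
Qed.

Lemma vertex_of_inj x y : x < 30 -> y < 30 -> vertex_of x = vertex_of y -> x = y.
Proof.
move=> hx hy e; move/allP: vertex_of_inj_all => /(_ x); rewrite mem_iota add0n hx => /(_ isT).
by move/allP => /(_ y); rewrite mem_iota add0n hy => /(_ isT); rewrite e eqxx => /eqP.
Qed.

Lemma mono_triangle_exists (col : nat -> nat -> nat) :
  (forall x y, col x y = col y x) -> (forall x y, col x y < 3) ->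
  exists x y z, [/\ x < 30, y < 30, z < 30, [/\ adj x y, adj y z & adj x z] &
                    col x y = col y z /\ col x y = col x z].
Proof.
move=> hsym hlt.
case: (boolP [exists x : 'I_30, exists y : 'I_30, exists z : 'I_30,
                [&& adj x y, adj y z, adj x z, col x y == col y z & col x y == col x z]]).
  case/existsP => x /existsP [y /existsP [z /and5P [hxy hyz hxz /eqP e1 /eqP e2]]].
  by exists x, y, z; split; rewrite ?ltn_ord.
move=> /negP hn; exfalso; apply: (no_triangle_free_coloring hsym hlt).
move=> x y z hx hy hz hxy hyz hxz e1 e2; apply: hn.
apply/existsP; exists (Ordinal hx); apply/existsP; exists (Ordinal hy).
by apply/existsP; exists (Ordinal hz); rewrite /= hxy hyz hxz -e1 -e2 !eqxx.
Qed.

Lemma mono_triangle_witness (c : {set H6_vertex} -> 'I_3) x y z :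
  x < 30 -> y < 30 -> z < 30 -> adj x y -> adj y z -> adj x z ->
  c [set vertex_of y; vertex_of z] = c [set vertex_of x; vertex_of y] ->
  c [set vertex_of x; vertex_of z] = c [set vertex_of x; vertex_of y] ->
  exists i (K : {set H6_vertex}), [/\ #|K| = three3 i, is_clique H6C5 K &
                  forall a b, a \in K -> b \in K -> a != b -> c [set a; b] = i].
Proof.
move=> hx hy hz hxy hyz hxz e1 e2.
have neq u w : u < 30 -> w < 30 -> adj u w -> vertex_of u != vertex_of w.
  by move=> hu hw huw; apply: contraTneq huw => /vertex_of_inj -> //; rewrite adj_irr.
have nxy := neq _ _ hx hy hxy; have nyz := neq _ _ hy hz hyz; have nxz := neq _ _ hx hz hxz.
have mem3 a : a \in [set vertex_of x; vertex_of y; vertex_of z] ->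
    [\/ a = vertex_of x, a = vertex_of y | a = vertex_of z].
  by rewrite !inE => /orP [/orP [] | ] /eqP ->; [constructor 1 | constructor 2 | constructor 3].
exists (c [set vertex_of x; vertex_of y]), [set vertex_of x; vertex_of y; vertex_of z]; split.
- rewrite setUC cardsU1 cards2 nxy !inE.
  by rewrite (eq_sym (vertex_of z)) (negbTE nxz) (eq_sym (vertex_of z)) (negbTE nyz).
- move=> a b /mem3 [] -> /mem3 [] -> //; rewrite ?eqxx // => _;
  by rewrite H6C5_vertex_of // 1?adj_sym.
- move=> a b /mem3 [] -> /mem3 [] -> //; rewrite ?eqxx // => _;
  by rewrite ?e1 ?e2 // setUC ?e1 ?e2.
Qed.

Theorem mainTheorem1 : edge_arrows H6C5 three3.
Proof.
move=> c; pose col x y := nat_of_ord (c [set vertex_of x; vertex_of y]).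
have hsym x y : col x y = col y x by rewrite /col setUC.
have [x [y [z [hx hy hz [hxy hyz hxz] [e1 e2]]]]] := mono_triangle_exists hsym (fun _ _ => ltn_ord _).
by apply: (mono_triangle_witness hx hy hz hxy hyz hxz); apply: val_inj; [exact: esym e1 | exact: esym e2].
Qed.
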